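(* Let $J$ be a Jacobi matrix and $g_n,c_n$ as in the context. (i) If $\sum_{n=1}^\infty[|b_n|+|a_n^2-1|]<\infty$, then $u(z;J)=\lim_{n\to\infty}g_n(z)$ converges for all $z\in\overline{\mathbb{D}}\setminus\{\pm1\}$, uniformly on compact subsets of $\overline{\mathbb{D}}\setminus\{\pm1\}$; $u$ is analytic on $\mathbb{D}$ and continuous on $\overline{\mathbb{D}}\setminus\{\pm1\}$; and for $z\in\mathbb{D}$, $\lim_{n\to\infty}c_n(z)=\frac{u(z;J)}{1-z^2}$. (ii) If $\sum_{n=1}^\infty n[|b_n|+|a_n^2-1|]<\infty$, then $\lim_n g_n(z)$ converges for all $z\in\overline{\mathbb{D}}$, uniformly there, and $u$ is continuous on $\overline{\mathbb{D}}$. (iii) If $|b_n|+|a_n^2-1|\le CR^{-2n}$ for some $C$ and $R>1$, then $\lim_n g_n(z)$ converges for $z\in\{|z|<R\}$, uniformly on compact subsets.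
   Context: $J$ is a Jacobi matrix with diagonal entries $b_n\in\mathbb{R}$ and off-diagonal entries $a_n>0$ ($n\ge1$); set $a_0=1$. The orthonormal polynomials satisfy $p_{-1}=0$, $p_0=1$, $xp_n(x)=a_{n+1}p_{n+1}(x)+b_{n+1}p_n(x)+a_np_{n-1}(x)$. Define $c_n(z)=z^np_n(z+z^{-1})$ and $g_n(z)=z^n\bigl(p_n(z+z^{-1})-a_nzp_{n-1}(z+z^{-1})\bigr)$. $\mathbb{D}=\{|z|<1\}$. *)

From Stdlib Require Import Reals List.
From Coquelicot Require Import Coquelicot.
Open Scope R_scope.

(* Jacobi parameters: a, b : nat -> R; only a n, b n for n >= 1 are used;
   the convention a_0 = 1 is built in through [a0]. *)
Definition a0 (a : nat -> R) (n : nat) : R := match n with O => 1 | _ => a n end.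

(* coefficients of the orthonormal polynomials:
   jcoef a b n = (coefficients of p_n, coefficients of p_(n-1)),
   with p_(-1) = 0, p_0 = 1 and
   p_(m+1)(x) = ((x - b_(m+1)) p_m(x) - a_m p_(m-1)(x)) / a_(m+1). *)
Fixpoint jcoef (a b : nat -> R) (n : nat) : (nat -> R) * (nat -> R) :=
  match n with
  | O => (fun k => match k with O => 1 | _ => 0 end, fun _ => 0)
  | S m =>
      let (p, q) := jcoef a b m in
      (fun k => ((match k with O => 0 | S k' => p k' end)
                 - b (S m) * p k - a0 a m * q k) / a (S m), p)
  end.

Definition pcoef (a b : nat -> R) (n k : nat) : R := fst (jcoef a b n) k.

Definition pn (a b : nat -> R) (n : nat) (x : C) : C :=
  sum_n (fun k => RtoC (pcoef a b n k) * pow_n x k)%C n.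

(* c_n(z) = z^n p_n(z + 1/z), written out as the polynomial
   sum_{k<=n} pcoef n k z^(n-k) (1+z^2)^k  (this is z^n p_n(z+z^{-1})
   for z <> 0, and its polynomial (continuous) extension at z = 0). *)
Definition cn (a b : nat -> R) (n : nat) (z : C) : C :=
  sum_n (fun k => RtoC (pcoef a b n k) * pow_n z (n - k)
                   * pow_n (1 + z * z) k)%C n.

(* g_n(z) = z^n (p_n(z+1/z) - a_n z p_(n-1)(z+1/z))
          = c_n(z) - a_n z^2 c_(n-1)(z)  (and g_0 = c_0 = 1 since p_(-1)=0) *)
Definition gn (a b : nat -> R) (n : nat) (z : C) : C :=
  match n with
  | O => cn a b O z
  | S m => (cn a b (S m) z - RtoC (a (S m)) * z * z * cn a b m z)%C
  end.

Definition compact_C (K : C -> Prop) : Prop :=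
  forall (I : Type) (U : I -> C -> Prop),
    (forall i, @open C_UniformSpace (U i)) ->
    (forall z, K z -> exists i, U i z) ->
    exists l : list I, forall z, K z -> exists i, In i l /\ U i z.

Definition cv_C (s : nat -> C) (l : C) : Prop :=
  forall eps : R, 0 < eps -> exists N : nat, forall n, (N <= n)%nat ->
    Cmod (s n - l)%C < eps.

Definition unif_cv_on (f : nat -> C -> C) (u : C -> C) (S : C -> Prop) : Prop :=
  forall eps : R, 0 < eps -> exists N : nat, forall n z, (N <= n)%nat -> S z ->
    Cmod (f n z - u z)%C < eps.

Definition unif_cv_compacts (f : nat -> C -> C) (u : C -> C) (S : C -> Prop) : Prop :=
  forall K : C -> Prop, compact_C K -> (forall z, K z -> S z) -> unif_cv_on f u K.

Definition continuous_on_C (u : C -> C) (S : C -> Prop) : Prop :=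
  forall z, S z -> forall eps : R, 0 < eps -> exists delta : R, 0 < delta /\
    forall w, S w -> Cmod (w - z)%C < delta -> Cmod (u w - u z)%C < eps.

Definition analytic_on (u : C -> C) (S : C -> Prop) : Prop :=
  forall z0, S z0 -> exists (r : R) (c : nat -> C), 0 < r /\
    forall z, Cmod (z - z0)%C < r -> @is_pseries C_AbsRing C_NormedModule c (z - z0)%C (u z).

Definition open_disk (z : C) : Prop := Cmod z < 1.
Definition closed_disk (z : C) : Prop := Cmod z <= 1.
Definition closed_disk_pm1 (z : C) : Prop :=
  Cmod z <= 1 /\ z <> RtoC 1 /\ z <> RtoC (-1).
Definition disk_R (R0 : R) (z : C) : Prop := Cmod z < R0.

Definition jdev (a b : nat -> R) (n : nat) : R := Rabs (b n) + Rabs (a n ^ 2 - 1).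

(* With [d_n = g_(n+1) - g_n] the recurrence gives
     a_(n+1) d_n = (1 - a_(n+1)) g_n + ((1 - a_(n+1)^2) z^2 - b_(n+1) z) c_n,
     c_(n+1) = g_(n+1) + a_(n+1) z^2 c_n.
   For |z| <= t these two relations yield a discrete Gronwall bound
   |d_n| <= r_n prod_(k<n) (1 + r_k) with r_n ~ (|b_(n+1)| + |a_(n+1)^2 - 1|) sum_(k<=n) t^(2k);
   r is summable for t < 1 under (i), for t = 1 under (ii) and for t < R under (iii), so g_n
   converges uniformly on |z| <= t.  On the unit circle away from +-1, c_n is controlled instead
   through the defect (1 - z^2) c_n - g_n, which obeys a recursion of the same kind; for |z| < 1
   the defect contracts by |z|^2, hence c_n -> u / (1 - z^2).  The same inequalities hold for
   weighted l^1 norms of the Taylor coefficients of g_n(z0 + w), so around each z0 in the disk u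
   is the sum of the limiting power series. *)

From Stdlib Require Import Reals Lra Lia List.
From Coquelicot Require Import Coquelicot.
Open Scope R_scope.

(* [sum_n] and [pow_n] are stated with Coquelicot's generic ring operations. *)
Ltac to_C_ops :=
  change plus with Cplus in *; change mult with Cmult in *;
  change one with (RtoC 1) in *; change zero with (RtoC 0) in *.

(** * Real sequences *)

Fixpoint psum (f : nat -> R) (n : nat) : R :=
  match n with O => 0 | S k => psum f k + f k end.

Fixpoint prod1p (f : nat -> R) (n : nat) : R :=
  match n with O => 1 | S k => prod1p f k * (1 + f k) end.

Lemma psum_S f n : psum f (S n) = sum_n f n.
Proof.
  induction n; simpl psum in *.
  - rewrite sum_O. ring.
  - rewrite sum_Sn, IHn. reflexivity.
Qed.

Lemma is_lim_seq_psum f : ex_series f -> is_lim_seq (psum f) (Series f).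
Proof.
  intros H. apply is_lim_seq_incr_1. eapply is_lim_seq_ext.
  - intros n. symmetry. apply psum_S.
  - now apply Series_correct.
Qed.

Lemma psum_le_Series f n : (forall k, 0 <= f k) -> ex_series f -> psum f n <= Series f.
Proof.
  intros Hf Hex. apply (is_lim_seq_incr_compare _ _ (is_lim_seq_psum f Hex)).
  intros k. simpl. specialize (Hf k). lra.
Qed.

Lemma prod1p_ge1 f n : (forall k, 0 <= f k) -> 1 <= prod1p f n.
Proof. intros H. induction n; simpl; [lra|]. specialize (H n). nra. Qed.

Lemma le_prod1p_of_step f x c n : (forall k, 0 <= f k) ->
  (forall k, x (S k) <= x k * (1 + f k)) -> x 0%nat <= c -> x n <= c * prod1p f n.
Proof.
  intros Hf Hx Hc. induction n; simpl; [lra|].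
  eapply Rle_trans; [apply Hx|]. rewrite <- Rmult_assoc.
  apply Rmult_le_compat_r; [specialize (Hf n); lra | easy].
Qed.

Lemma prod1p_le_exp f n : (forall k, 0 <= f k) -> prod1p f n <= exp (psum f n).
Proof.
  intros H. induction n; simpl.
  - rewrite exp_0. lra.
  - rewrite exp_plus. pose proof (exp_ineq1_le (f n)). pose proof (prod1p_ge1 f n H).
    specialize (H n). apply Rmult_le_compat; lra.
Qed.

Lemma exp_le_exp x y : x <= y -> exp x <= exp y.
Proof. intros [H | ->]; [now apply Rlt_le, exp_increasing | apply Rle_refl]. Qed.

Lemma prod1p_le_exp_Series f n :
  (forall k, 0 <= f k) -> ex_series f -> prod1p f n <= exp (Series f).
Proof.
  intros H Hs. eapply Rle_trans; [now apply prod1p_le_exp|].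
  apply exp_le_exp. now apply psum_le_Series.
Qed.

Lemma ex_series_le_nonneg (f g : nat -> R) :
  (forall n, 0 <= f n <= g n) -> ex_series g -> ex_series f.
Proof.
  intros H. apply (ex_series_le (K := R_AbsRing) (V := R_CompleteNormedModule)).
  intros n. change norm with Rabs. simpl. rewrite Rabs_right; apply H || apply Rle_ge, H.
Qed.

Lemma ex_series_succ_geom q : 0 < q < 1 -> ex_series (fun n => INR (S n) * q ^ n).
Proof.
  intros Hq.
  assert (Hpos : forall n, 0 < INR (S n) * q ^ n)
    by (intros n; apply Rmult_lt_0_compat; [apply lt_0_INR; lia | apply pow_lt; lra]).
  eapply ex_series_ext; [intros n; apply Rabs_right, Rle_ge, Rlt_le, Hpos|].
  apply (ex_series_DAlembert _ q); [lra | intros n; apply Rgt_not_eq, Hpos |].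
  apply (is_lim_seq_ext (fun n => q * (1 + / INR (S n)))).
  - intros n. assert (0 < / INR (S n)) by (apply Rinv_0_lt_compat, lt_0_INR; lia).
    replace (INR (S (S n)) * q ^ S n / (INR (S n) * q ^ n)) with (q * (1 + / INR (S n))).
    + rewrite Rabs_right; nra.
    + rewrite !S_INR. simpl. field.
      split; [apply Rgt_not_eq, pow_lt; lra | pose proof (pos_INR n); lra].
  - assert (Hinv : is_lim_seq (fun n => / INR (S n)) 0).
    { replace (Finite 0) with (Rbar_inv p_infty) by reflexivity.
      apply is_lim_seq_inv; [|discriminate].
      apply -> (is_lim_seq_incr_1 INR). apply is_lim_seq_INR. }
    pose proof (is_lim_seq_scal_l _ q _ (is_lim_seq_plus' _ _ 1 0 (is_lim_seq_const 1) Hinv)) as H.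
    simpl in H. now rewrite Rplus_0_r, Rmult_1_r in H.
Qed.

Lemma Rdiv_le_compat_lower N M x m : 0 <= N <= M -> 0 < m <= x -> N / x <= M / m.
Proof.
  intros HN Hm. unfold Rdiv. apply Rmult_le_compat; try lra.
  - apply Rlt_le, Rinv_0_lt_compat. lra.
  - apply Rinv_le_contravar; lra.
Qed.

Definition series_tail (e : nat -> R) (n : nat) : R := Series e - psum e n.

Lemma is_lim_seq_series_tail e : ex_series e -> is_lim_seq (series_tail e) 0.
Proof.
  intros He. replace (Finite 0) with (Rbar_minus (Series e) (Series e)) by (simpl; f_equal; ring).
  apply is_lim_seq_minus'; [apply is_lim_seq_const | now apply is_lim_seq_psum].
Qed.

Lemma series_tail_small e : ex_series e ->
  forall eps, 0 < eps -> exists N, forall n, (N <= n)%nat -> series_tail e n < eps.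
Proof.
  intros He eps Heps. pose proof (is_lim_seq_series_tail e He) as Hl. apply is_lim_seq_spec in Hl.
  destruct (Hl (mkposreal eps Heps)) as [N HN].
  exists N. intros n Hn. specialize (HN n Hn). simpl in HN. apply Rabs_lt_between in HN. lra.
Qed.

Lemma psum_sub_le_series_tail e n k : (forall k, 0 <= e k) -> ex_series e ->
  psum e (n + k) - psum e n <= series_tail e n.
Proof. intros He0 He. unfold series_tail. pose proof (psum_le_Series e (n + k) He0 He). lra. Qed.

Lemma is_lim_seq_contraction_0 (h eta : nat -> R) q : 0 <= q < 1 -> (forall n, 0 <= h n) ->
  (forall n, h (S n) <= q * h n + eta n) -> is_lim_seq eta 0 -> is_lim_seq h 0.
Proof.
  intros Hq Hh Hrec Heta. apply is_lim_seq_spec. intros eps.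
  pose proof (cond_pos eps) as He. apply is_lim_seq_spec in Heta.
  destruct (Heta (mkposreal (eps * (1 - q) / 2) ltac:(apply Rdiv_lt_0_compat; nra))) as [N0 HN0].
  simpl in HN0. set (A := Rabs (h N0 - eps / 2)).
  assert (HA : 0 <= A) by apply Rabs_pos.
  (* Once [eta <= eps (1 - q) / 2], the excess [h - eps / 2] decays geometrically. *)
  assert (Hk : forall j, h (N0 + j)%nat - eps / 2 <= q ^ j * A).
  { induction j.
    - rewrite Nat.add_0_r, pow_O, Rmult_1_l. apply Rle_abs.
    - rewrite Nat.add_succ_r. pose proof (Hrec (N0 + j)%nat).
      specialize (HN0 (N0 + j)%nat ltac:(lia)). rewrite Rminus_0_r in HN0.
      apply Rabs_lt_between in HN0. simpl pow.
      assert (q * (h (N0 + j)%nat - eps / 2) <= q * (q ^ j * A)) by (apply Rmult_le_compat_l; lra).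
      nra. }
  destruct (pow_lt_1_zero q ltac:(rewrite Rabs_right; lra) (eps / 2 / (A + 1))
    ltac:(apply Rdiv_lt_0_compat; lra)) as [N1 HN1].
  exists (N0 + N1)%nat. intros n Hn. rewrite Rminus_0_r, Rabs_right by (apply Rle_ge, Hh).
  replace n with (N0 + (n - N0))%nat by lia.
  specialize (Hk (n - N0)%nat). specialize (HN1 (n - N0)%nat ltac:(lia)).
  rewrite Rabs_right in HN1 by (apply Rle_ge, pow_le; lra).
  assert (q ^ (n - N0) * A <= eps / 2 / (A + 1) * A) by (apply Rmult_le_compat_r; lra).
  assert (eps / 2 / (A + 1) * A < eps / 2).
  { apply (Rmult_lt_reg_r (A + 1)); [lra|].
    replace (eps / 2 / (A + 1) * A * (A + 1)) with (eps / 2 * A) by (field; lra). nra. }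
  lra.
Qed.

(** * Complex analysis toolkit *)

Lemma Cmod_le_Rabs_re_im (w : C) : Cmod w <= Rabs (fst w) + Rabs (snd w).
Proof.
  unfold Cmod. rewrite <- (sqrt_Rsqr (Rabs (fst w) + Rabs (snd w)))
    by (pose proof (Rabs_pos (fst w)); pose proof (Rabs_pos (snd w)); lra).
  apply sqrt_le_1_alt. rewrite <- (pow2_abs (fst w)), <- (pow2_abs (snd w)).
  pose proof (Rabs_pos (fst w)). pose proof (Rabs_pos (snd w)). unfold Rsqr. nra.
Qed.

Lemma Rabs_im_le_Cmod (w : C) : Rabs (snd w) <= Cmod w.
Proof.
  unfold Cmod. rewrite <- sqrt_Rsqr_abs. apply sqrt_le_1_alt. unfold Rsqr. simpl.
  pose proof (pow2_ge_0 (fst w)). nra.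
Qed.

Lemma Cmod_le_add_sub (u v : C) : Cmod u <= Cmod v + Cmod (u - v)%C.
Proof. replace u with (v + (u - v))%C at 1 by ring. apply Cmod_triangle. Qed.

Lemma Cmod_sqr (z : C) : Cmod (z * z)%C = Cmod z ^ 2.
Proof. rewrite Cmod_mult. ring. Qed.

Lemma Rabs_Cmod_sub_le (u v : C) : Rabs (Cmod u - Cmod v) <= Cmod (u - v)%C.
Proof.
  pose proof (Cmod_le_add_sub u v). pose proof (Cmod_le_add_sub v u).
  replace (v - u)%C with (- (u - v))%C in * by ring. rewrite Cmod_opp in *. apply Rabs_le. lra.
Qed.

Lemma ball_Cmod (z y : C) (e : R) : @ball C_UniformSpace z e y -> Cmod (y - z)%C < 2 * e.
Proof.
  intros [H1 H2]. eapply Rle_lt_trans; [apply Cmod_le_Rabs_re_im|].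
  change (Rabs (fst y - fst z) < e) in H1. change (Rabs (snd y - snd z) < e) in H2.
  change (Rabs (fst y - fst z) + Rabs (snd y - snd z) < 2 * e). lra.
Qed.

Definition ulim (f : nat -> C -> C) (z : C) : C :=
  (real (Lim_seq (fun n => fst (f n z))), real (Lim_seq (fun n => snd (f n z)))).

Section UniformLimit.
Variables (f : nat -> C -> C) (S : C -> Prop) (e : nat -> R).
Hypothesis he0 : forall n, 0 <= e n.
Hypothesis he : ex_series e.
Hypothesis hf : forall n z, S z -> Cmod (f (Datatypes.S n) z - f n z)%C <= e n.

Lemma Cmod_sub_le_series_tail z n k : S z -> Cmod (f (n + k)%nat z - f n z)%C <= series_tail e n.
Proof.
  intros Hz. eapply Rle_trans; [|apply (psum_sub_le_series_tail e n k he0 he)].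
  induction k.
  - rewrite Nat.add_0_r. replace (f n z - f n z)%C with (RtoC 0) by ring. rewrite Cmod_0. lra.
  - rewrite Nat.add_succ_r. simpl psum.
    replace (f (Datatypes.S (n + k)) z - f n z)%C
      with ((f (Datatypes.S (n + k)) z - f (n + k)%nat z) + (f (n + k)%nat z - f n z))%C by ring.
    eapply Rle_trans; [apply Cmod_triangle|]. pose proof (hf (n + k) z Hz). lra.
Qed.

Lemma component_lim_le_series_tail (p : C -> R) z n :
  (forall w, Rabs (p w) <= Cmod w) -> (forall u v, p (u - v)%C = p u - p v) -> S z ->
  Rabs (p (f n z) - real (Lim_seq (fun m => p (f m z)))) <= series_tail e n.
Proof.
  intros Hp Hlin Hz. set (s := fun m => p (f m z)).
  assert (Hs : forall n k, Rabs (s (n + k)%nat - s n) <= series_tail e n).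
  { intros n' k. unfold s. rewrite <- Hlin.
    eapply Rle_trans; [apply Hp | now apply Cmod_sub_le_series_tail]. }
  assert (Hcv : is_lim_seq s (real (Lim_seq s))).
  { apply Lim_seq_correct', ex_lim_seq_cauchy_corr. intros eps.
    destruct (series_tail_small e he (eps / 2) ltac:(destruct eps; simpl; lra)) as [N HN].
    exists N. intros i j Hi Hj. specialize (HN N (le_n N)).
    pose proof (Hs N (i - N)%nat). pose proof (Hs N (j - N)%nat).
    replace (N + (i - N))%nat with i in * by lia. replace (N + (j - N))%nat with j in * by lia.
    apply Rabs_lt_between. apply Rabs_le_between in H, H0. lra. }
  rewrite Rabs_minus_sym. set (l := real (Lim_seq s)) in *.
  assert (Hlim : is_lim_seq (fun k => Rabs (s (n + k)%nat - s n)) (Rabs (l - s n))).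
  { apply (is_lim_seq_abs _ (l - s n)), is_lim_seq_minus'; [|apply is_lim_seq_const].
    apply (is_lim_seq_incr_n s n) in Hcv.
    eapply is_lim_seq_ext; [|exact Hcv]. intros k. simpl. now rewrite Nat.add_comm. }
  apply (is_lim_seq_le _ _ _ _ (fun k => Hs n k) Hlim (is_lim_seq_const _)).
Qed.

Lemma Cmod_sub_ulim_le z n : S z -> Cmod (f n z - ulim f z)%C <= 2 * series_tail e n.
Proof.
  intros Hz. eapply Rle_trans; [apply Cmod_le_Rabs_re_im|].
  pose proof (component_lim_le_series_tail fst z n (fun w => re_le_Cmod w) (fun _ _ => eq_refl) Hz).
  pose proof (component_lim_le_series_tail snd z n Rabs_im_le_Cmod (fun _ _ => eq_refl) Hz).
  change (Rabs (fst (f n z) - fst (ulim f z)) + Rabs (snd (f n z) - snd (ulim f z))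
    <= 2 * series_tail e n).
  unfold ulim. cbn [fst snd]. lra.
Qed.

Lemma unif_cv_on_ulim : unif_cv_on f (ulim f) S.
Proof.
  intros eps Heps. destruct (series_tail_small e he (eps / 2) ltac:(lra)) as [N HN].
  exists N. intros n z Hn Hz. pose proof (Cmod_sub_ulim_le z n Hz). specialize (HN n Hn). lra.
Qed.

Lemma cv_C_ulim z : S z -> cv_C (fun n => f n z) (ulim f z).
Proof.
  intros Hz eps Heps. destruct (unif_cv_on_ulim eps Heps) as [N HN].
  exists N. intros n Hn. now apply HN.
Qed.

End UniformLimit.

Lemma unif_cv_on_subset f g (S T : C -> Prop) :
  unif_cv_on f g T -> (forall z, S z -> T z) -> unif_cv_on f g S.
Proof.
  intros H HST eps He. destruct (H eps He) as [N HN]. exists N. intros n z Hn Hz. now apply HN, HST.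
Qed.

Lemma cv_C_of_unif_cv f g (S : C -> Prop) z :
  unif_cv_on f g S -> S z -> cv_C (fun n => f n z) (g z).
Proof. intros H Hz eps He. destruct (H eps He) as [N HN]. exists N. intros n Hn. now apply HN. Qed.

(* Continuity for the metric [Cmod (w - z)]; Coquelicot's default uniform structure on [C]
   is the product one. *)
Local Notation CU := (AbsRing_UniformSpace C_AbsRing).

Definition Ccontinuous (f : C -> C) (z : C) : Prop := @continuous CU CU f z.

Lemma Ccontinuous_plus (f g : C -> C) z :
  Ccontinuous f z -> Ccontinuous g z -> Ccontinuous (fun w => f w + g w)%C z.
Proof. exact (@continuous_plus CU C_AbsRing (AbsRing_NormedModule C_AbsRing) f g z). Qed.

Lemma Ccontinuous_mult (f g : C -> C) z :
  Ccontinuous f z -> Ccontinuous g z -> Ccontinuous (fun w => f w * g w)%C z.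
Proof. exact (@continuous_mult CU C_AbsRing f g z). Qed.

Lemma Ccontinuous_opp (f : C -> C) z : Ccontinuous f z -> Ccontinuous (fun w => - f w)%C z.
Proof. exact (@continuous_opp CU C_AbsRing (AbsRing_NormedModule C_AbsRing) f z). Qed.

Lemma Ccontinuous_id z : Ccontinuous (fun w => w) z.
Proof. exact (@continuous_id CU z). Qed.

Lemma Ccontinuous_const c z : Ccontinuous (fun _ => c) z.
Proof. exact (@continuous_const CU CU c z). Qed.

Lemma Ccontinuous_ext (f g : C -> C) z :
  (forall w, f w = g w) -> Ccontinuous f z -> Ccontinuous g z.
Proof. exact (@continuous_ext CU CU f g z). Qed.

Ltac Ccontinuity :=
  unfold Cdiv, Cminus;
  repeat match goal with
  | |- Ccontinuous (fun w => Cplus (@?f w) (@?g w)) _ => apply (Ccontinuous_plus f g)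
  | |- Ccontinuous (fun w => Cmult (@?f w) (@?g w)) _ => apply (Ccontinuous_mult f g)
  | |- Ccontinuous (fun w => Copp (@?f w)) _ => apply (Ccontinuous_opp f)
  | |- Ccontinuous (fun w => w) _ => apply Ccontinuous_id
  | |- Ccontinuous (fun _ => ?c) _ => apply Ccontinuous_const
  | H : Ccontinuous ?f ?z |- Ccontinuous (fun w => ?f w) ?z => exact H
  end.

Lemma Ccontinuous_eps_delta (f : C -> C) z : Ccontinuous f z ->
  forall eps, 0 < eps -> exists del, 0 < del /\
    forall w, Cmod (w - z)%C < del -> Cmod (f w - f z)%C < eps.
Proof.
  intros Hf eps Heps.
  destruct (proj1 (filterlim_locally _ _) Hf (mkposreal eps Heps)) as [del Hdel].
  exists del. split; [apply cond_pos|]. intros w Hw. now apply Hdel.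
Qed.

Lemma continuous_within_of_unif_cv (f : nat -> C -> C) u (S T : C -> Prop) z :
  unif_cv_on f u T -> (forall n, Ccontinuous (f n) z) -> T z ->
  (exists d0, 0 < d0 /\ forall w, S w -> Cmod (w - z)%C < d0 -> T w) ->
  forall eps, 0 < eps -> exists del, 0 < del /\
    forall w, S w -> Cmod (w - z)%C < del -> Cmod (u w - u z)%C < eps.
Proof.
  intros Hu Hc Hz [d0 [Hd0 HT]] eps He.
  destruct (Hu (eps / 3) ltac:(lra)) as [N HN].
  destruct (Ccontinuous_eps_delta _ _ (Hc N) (eps / 3) ltac:(lra)) as [d1 [Hd1 H1]].
  exists (Rmin d0 d1). split; [now apply Rmin_pos|]. intros w Hw Hwz.
  assert (Tw : T w) by (apply HT; [easy | eapply Rlt_le_trans; [apply Hwz | apply Rmin_l]]).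
  specialize (H1 w ltac:(eapply Rlt_le_trans; [apply Hwz | apply Rmin_r])).
  pose proof (HN N w (le_n N) Tw). pose proof (HN N z (le_n N) Hz).
  replace (u w - u z)%C with (- (f N w - u w) + (f N w - f N z) + (f N z - u z))%C by ring.
  eapply Rle_lt_trans; [apply Cmod_triangle|].
  eapply Rle_lt_trans; [apply Rplus_le_compat_r, Cmod_triangle|]. rewrite Cmod_opp. lra.
Qed.

Lemma Ccontinuous_one_minus_sqr z : Ccontinuous (fun w => 1 - w * w)%C z.
Proof. Ccontinuity. Qed.

Lemma In_le_list_max l i : In i l -> (i <= list_max l)%nat.
Proof. intros Hi. now apply (proj1 (Forall_forall _ l) (proj1 (list_max_le l _) (le_n _))). Qed.

Lemma compact_pos_lower_bound (K : C -> Prop) (phi : C -> R) : compact_C K ->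
  (forall z eps, 0 < eps -> exists del, 0 < del /\
     forall w, Cmod (w - z)%C < del -> Rabs (phi w - phi z) < eps) ->
  (forall z, K z -> 0 < phi z) -> exists del, 0 < del /\ forall z, K z -> del <= phi z.
Proof.
  intros HK Hphi Hpos.
  destruct (HK nat (fun i z => / INR (S i) < phi z)) as [l Hl].
  - intros i z Hz. set (gap := phi z - / INR (S i)).
    destruct (Hphi z gap ltac:(unfold gap; lra)) as [d [Hd Hw]].
    exists (mkposreal (d / 2) ltac:(lra)). intros y Hy. apply ball_Cmod in Hy. simpl in Hy.
    specialize (Hw y ltac:(lra)). apply Rabs_lt_between in Hw. unfold gap in Hw. lra.
  - intros z Hz. destruct (archimed_cor1 (phi z) (Hpos z Hz)) as [N [HN1 HN2]].
    exists (pred N). now replace (S (pred N)) with N by lia.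
  - exists (/ INR (S (list_max l))). split; [apply Rinv_0_lt_compat, lt_0_INR; lia|].
    intros z Hz. destruct (Hl z Hz) as [i [Hi Hu]]. left. eapply Rle_lt_trans; [|apply Hu].
    apply Rinv_le_contravar; [apply lt_0_INR; lia|]. apply le_INR.
    pose proof (In_le_list_max l i Hi). lia.
Qed.

Definition boundary_region (dl : R) (z : C) : Prop := Cmod z <= 1 /\ dl <= Cmod (1 - z * z)%C.

Lemma one_minus_sqr_Cmod_pos z : closed_disk_pm1 z -> 0 < Cmod (1 - z * z)%C.
Proof.
  intros [_ [H1 H2]]. apply Cmod_gt_0.
  replace (1 - z * z)%C with ((1 - z) * (1 + z))%C by ring. apply Cmult_neq_0; intros H.
  - apply H1. replace z with (1 - (1 - z))%C by ring. rewrite H.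
    apply injective_projections; simpl; ring.
  - apply H2. replace z with ((1 + z) - 1)%C by ring. rewrite H.
    apply injective_projections; simpl; ring.
Qed.

Lemma open_disk_pm1 z : Cmod z < 1 -> closed_disk_pm1 z.
Proof.
  intros Hz. split; [lra|].
  split; intros ->; [rewrite Cmod_1 in Hz | rewrite Cmod_R, Rabs_m1 in Hz]; lra.
Qed.

Lemma compact_pm1_boundary_region K : compact_C K -> (forall z, K z -> closed_disk_pm1 z) ->
  exists dl, 0 < dl /\ forall z, K z -> boundary_region dl z.
Proof.
  intros HK Hsub.
  destruct (compact_pos_lower_bound K (fun z => Cmod (1 - z * z)%C) HK) as [dl [Hdl Hb]].
  - intros z eps He.
    destruct (Ccontinuous_eps_delta _ z (Ccontinuous_one_minus_sqr z) eps He) as [d [Hd H]].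
    exists d. split; [easy|]. intros w Hw.
    eapply Rle_lt_trans; [apply Rabs_Cmod_sub_le | now apply H].
  - intros z Hz. now apply one_minus_sqr_Cmod_pos, Hsub.
  - exists dl. split; [easy|]. intros z Hz. split; [apply (Hsub z Hz) | now apply Hb].
Qed.

Lemma compact_disk_radius K R0 : compact_C K -> (forall z, K z -> disk_R R0 z) ->
  exists r, r < R0 /\ forall z, K z -> Cmod z <= r.
Proof.
  intros HK Hsub. destruct (compact_pos_lower_bound K (fun z => R0 - Cmod z) HK) as [d [Hd H]].
  - intros z eps He. exists eps. split; [easy|]. intros w Hw.
    replace (R0 - Cmod w - (R0 - Cmod z)) with (- (Cmod w - Cmod z)) by ring.
    rewrite Rabs_Ropp. eapply Rle_lt_trans; [apply Rabs_Cmod_sub_le | easy].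
  - intros z Hz. specialize (Hsub z Hz). unfold disk_R in Hsub. lra.
  - exists (R0 - d). split; [lra|]. intros z Hz. specialize (H z Hz). lra.
Qed.

(** * Power series from weighted approximations *)

Definition cshift (f : nat -> C) (k : nat) : C := match k with O => RtoC 0 | S k' => f k' end.

(* Multiplication by [z0 + w] on coefficient sequences of polynomials in [w]. *)
Definition mul_affine (z0 : C) (f : nat -> C) (k : nat) : C := (z0 * f k + cshift f k)%C.

Definition unit_coef (k : nat) : C := match k with O => RtoC 1 | S _ => RtoC 0 end.

Definition coef_support (f : nat -> C) (s : nat) : Prop := forall k, (s < k)%nat -> f k = RtoC 0.

Fixpoint csum (f : nat -> C) (n : nat) : C :=
  match n with O => RtoC 0 | S k => (csum f k + f k)%C end.

Definition peval (f : nat -> C) (K : nat) (w : C) : C := csum (fun k => f k * pow_n w k)%C K.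

Definition wnorm (rho : R) (f : nat -> C) (D : nat) : R := psum (fun k => Cmod (f k) * rho ^ k) D.

Section WeightedNorm.
Variable rho : R.
Hypothesis hrho : 0 < rho.

Lemma wnorm_ge0 f D : 0 <= wnorm rho f D.
Proof.
  unfold wnorm. induction D; simpl; [lra|].
  pose proof (Cmod_ge_0 (f D)). pose proof (pow_le rho D ltac:(lra)). nra.
Qed.

Lemma wnorm_ext f g D : (forall k, f k = g k) -> wnorm rho f D = wnorm rho g D.
Proof. intros H. unfold wnorm. induction D; simpl; [easy|]. now rewrite IHD, H. Qed.

Lemma wnorm_add f g D : wnorm rho (fun k => f k + g k)%C D <= wnorm rho f D + wnorm rho g D.
Proof.
  unfold wnorm. induction D; simpl; [lra|]. pose proof (Cmod_triangle (f D) (g D)).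
  pose proof (pow_le rho D ltac:(lra)).
  assert (Cmod (f D + g D)%C * rho ^ D <= (Cmod (f D) + Cmod (g D)) * rho ^ D)
    by (apply Rmult_le_compat_r; auto).
  nra.
Qed.

Lemma wnorm_scal c f D : wnorm rho (fun k => c * f k)%C D = Cmod c * wnorm rho f D.
Proof. unfold wnorm. induction D; simpl; [ring|]. rewrite IHD, Cmod_mult. ring. Qed.

Lemma wnorm_cshift f D : wnorm rho (cshift f) D <= rho * wnorm rho f D.
Proof.
  unfold wnorm. destruct D; simpl; [lra|].
  assert (H : forall D, psum (fun k => Cmod (cshift f k) * rho ^ k) (S D)
                        = rho * psum (fun k => Cmod (f k) * rho ^ k) D).
  { induction D0; simpl in *; [rewrite Cmod_0; ring|]. rewrite IHD0. ring. }
  simpl in H. rewrite H. apply Rmult_le_compat_l; [lra|].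
  pose proof (Cmod_ge_0 (f D)). pose proof (pow_le rho D ltac:(lra)). nra.
Qed.

Lemma wnorm_mul_affine z0 f D :
  wnorm rho (mul_affine z0 f) D <= (Cmod z0 + rho) * wnorm rho f D.
Proof.
  unfold mul_affine. eapply Rle_trans; [apply wnorm_add|].
  rewrite wnorm_scal. pose proof (wnorm_cshift f D). lra.
Qed.

Lemma wnorm_unit_coef D : wnorm rho unit_coef D <= 1.
Proof.
  unfold wnorm. induction D; simpl; [lra|].
  destruct D; simpl in *; [rewrite Cmod_1; lra | rewrite Cmod_0; lra].
Qed.

Lemma Cmod_coef_le_wnorm f D k : (k < D)%nat -> Cmod (f k) * rho ^ k <= wnorm rho f D.
Proof.
  unfold wnorm. induction D; intros Hk; [lia|]. simpl.
  pose proof (wnorm_ge0 f D). unfold wnorm in *.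
  destruct (Nat.eq_dec k D) as [->|]; [lra|].
  pose proof (Cmod_ge_0 (f D)). pose proof (pow_le rho D ltac:(lra)).
  specialize (IHD ltac:(lia)). nra.
Qed.

Lemma Cmod_peval_le f w K : Cmod w <= rho -> Cmod (peval f K w) <= wnorm rho f K.
Proof.
  intros Hw. unfold peval, wnorm. induction K; simpl; [rewrite Cmod_0; lra|].
  eapply Rle_trans; [apply Cmod_triangle|]. apply Rplus_le_compat; [easy|].
  rewrite Cmod_mult. apply Rmult_le_compat_l; [apply Cmod_ge_0|].
  assert (Hp : forall k, Cmod (pow_n w k) = Cmod w ^ k).
  { induction k; simpl; [apply Cmod_1|]. to_C_ops. now rewrite Cmod_mult, IHk. }
  rewrite Hp. apply pow_incr. split; [apply Cmod_ge_0 | easy].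
Qed.

End WeightedNorm.

Lemma peval_ext f g K w : (forall k, f k = g k) -> peval f K w = peval g K w.
Proof. intros H. unfold peval. induction K; simpl; [easy|]. now rewrite IHK, H. Qed.

Lemma peval_add f g K w : peval (fun k => f k + g k)%C K w = (peval f K w + peval g K w)%C.
Proof. unfold peval. induction K; simpl; [ring|]. rewrite IHK. ring. Qed.

Lemma peval_scal c f K w : peval (fun k => c * f k)%C K w = (c * peval f K w)%C.
Proof. unfold peval. induction K; simpl; [ring|]. rewrite IHK. ring. Qed.

Lemma peval_cshift f K w : peval (cshift f) (S K) w = (w * peval f K w)%C.
Proof.
  unfold peval. induction K; simpl in *; to_C_ops; [ring|]. rewrite IHK. ring.
Qed.

Lemma peval_unit_coef K w : (1 <= K)%nat -> peval unit_coef K w = RtoC 1.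
Proof.
  intros HK. induction K as [|K IH]; [lia|]. destruct K.
  - unfold peval. simpl. to_C_ops. ring.
  - change (peval unit_coef (S (S K)) w) with (peval unit_coef (S K) w + RtoC 0 * pow_n w (S K))%C.
    rewrite IH by lia. ring.
Qed.

Lemma peval_mul_affine z0 f s K w : coef_support f s -> (s + 2 <= K)%nat ->
  peval (mul_affine z0 f) K w = ((z0 + w) * peval f K w)%C.
Proof.
  intros Hs HK. unfold mul_affine. rewrite peval_add, peval_scal.
  destruct K as [|K]; [lia|]. rewrite peval_cshift.
  change (peval f (S K) w) with (peval f K w + f K * pow_n w K)%C.
  rewrite (Hs K) by lia. ring.
Qed.

Lemma coef_support_mul_affine z0 f s : coef_support f s -> coef_support (mul_affine z0 f) (S s).
Proof.
  intros H k Hk. unfold mul_affine. rewrite H by lia. destruct k; [lia|]. simpl. rewrite H by lia.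
  ring.
Qed.

Lemma sum_n_peval f K w : sum_n (fun k => pow_n w k * f k)%C K = peval f (S K) w.
Proof.
  unfold peval. induction K; [rewrite sum_O; simpl; to_C_ops; ring|].
  rewrite sum_Sn, IHK. simpl. to_C_ops. ring.
Qed.

Definition coef_lim (G : nat -> nat -> C) (k : nat) : C := ulim (fun n (_ : C) => G n k) (RtoC 0).

Section CoefficientLimit.
Variables (G : nat -> nat -> C) (rho : R) (e : nat -> R).
Hypothesis hrho : 0 < rho.
Hypothesis he0 : forall n, 0 <= e n.
Hypothesis he : ex_series e.
Hypothesis hG : forall n D, wnorm rho (fun k => G (S n) k - G n k)%C D <= e n.

Lemma wnorm_sub_le_series_tail n j D :
  wnorm rho (fun k => G (n + j)%nat k - G n k)%C D <= series_tail e n.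
Proof.
  eapply Rle_trans; [|apply (psum_sub_le_series_tail e n j he0 he)]. induction j.
  - rewrite Nat.add_0_r, (wnorm_ext rho _ (fun k => RtoC 0 * RtoC 0)%C), wnorm_scal, Cmod_0
      by (intros; ring). lra.
  - rewrite Nat.add_succ_r. simpl psum.
    rewrite (wnorm_ext rho _
      (fun k => (G (S (n + j)) k - G (n + j)%nat k) + (G (n + j)%nat k - G n k))%C)
      by (intros; ring).
    eapply Rle_trans; [apply (wnorm_add rho hrho)|]. specialize (hG (n + j)%nat D). lra.
Qed.

Lemma coef_lim_cv k : cv_C (fun n => G n k) (coef_lim G k).
Proof.
  apply (cv_C_ulim (fun n (_ : C) => G n k) (fun _ => True) (fun n => e n / rho ^ k)); [| | | easy].
  - intros n. apply Rdiv_le_0_compat; [easy | now apply pow_lt].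
  - now apply ex_series_scal_r.
  - intros n _ _. apply (Rmult_le_reg_r (rho ^ k)); [now apply pow_lt|].
    unfold Rdiv. rewrite Rmult_assoc, Rinv_l, Rmult_1_r by (apply Rgt_not_eq, pow_lt; easy).
    eapply Rle_trans; [|apply (hG n (S k))].
    apply (Cmod_coef_le_wnorm rho hrho (fun k => G (S n) k - G n k)%C). lia.
Qed.

Lemma wnorm_coef_lim_small K eta : 0 < eta ->
  exists N, forall n, (N <= n)%nat -> wnorm rho (fun k => coef_lim G k - G n k)%C K <= eta.
Proof.
  revert eta. induction K; intros eta Heta.
  - exists 0%nat. intros. unfold wnorm. simpl. lra.
  - destruct (IHK (eta / 2) ltac:(lra)) as [N1 HN1].
    destruct (coef_lim_cv K (eta / 2 / rho ^ K)
      ltac:(apply Rdiv_lt_0_compat; [lra | now apply pow_lt]))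
      as [N2 HN2].
    exists (N1 + N2)%nat. intros n Hn. unfold wnorm. simpl.
    fold (wnorm rho (fun k => coef_lim G k - G n k)%C K).
    specialize (HN1 n ltac:(lia)). specialize (HN2 n ltac:(lia)).
    rewrite <- Cmod_opp. replace (- (coef_lim G K - G n K))%C with (G n K - coef_lim G K)%C by ring.
    assert (Cmod (G n K - coef_lim G K)%C * rho ^ K <= eta / 2 / rho ^ K * rho ^ K)
      by (apply Rmult_le_compat_r; [apply pow_le; lra | lra]).
    assert (eta / 2 / rho ^ K * rho ^ K = eta / 2) by (field; apply Rgt_not_eq, pow_lt; easy).
    lra.
Qed.

Lemma wnorm_coef_lim_le_series_tail n K :
  wnorm rho (fun k => coef_lim G k - G n k)%C K <= series_tail e n.
Proof.
  apply le_epsilon. intros eta Heta.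
  destruct (wnorm_coef_lim_small K eta Heta) as [N HN]. specialize (HN (n + N)%nat ltac:(lia)).
  rewrite (wnorm_ext rho _
    (fun k => (coef_lim G k - G (n + N)%nat k) + (G (n + N)%nat k - G n k))%C)
    by (intros; ring).
  eapply Rle_trans; [apply (wnorm_add rho hrho)|]. pose proof (wnorm_sub_le_series_tail n N K). lra.
Qed.

End CoefficientLimit.

Lemma is_pseries_of_wnorm_approx (G : nat -> nat -> C) (gam F : nat -> C) (deg : nat -> nat)
  (T : nat -> R) (u w : C) (rho : R) :
  Cmod w <= rho -> (forall n K, (deg n <= K)%nat -> peval (G n) K w = F n) ->
  cv_C F u -> is_lim_seq T 0 -> (forall n K, wnorm rho (fun k => gam k - G n k)%C K <= T n) ->
  @is_pseries C_AbsRing C_NormedModule gam w u.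
Proof.
  intros Hw HG HF HT Hgam. unfold is_pseries, is_series. apply filterlim_locally. intros eps.
  pose proof (cond_pos eps) as Heps. apply is_lim_seq_spec in HT.
  destruct (HF (eps / 2) ltac:(lra)) as [N1 HN1].
  destruct (HT (mkposreal (eps / 2) ltac:(lra))) as [N2 HN2].
  set (n := (N1 + N2)%nat). specialize (HN1 n ltac:(unfold n; lia)).
  specialize (HN2 n ltac:(unfold n; lia)).
  simpl in HN2. rewrite Rminus_0_r in HN2. apply Rabs_lt_between in HN2.
  exists (deg n). intros K HK. apply C_NormedModule_mixin_compat1.
  change (Cmod (sum_n (fun k => pow_n w k * gam k)%C K - u)%C < eps).
  rewrite sum_n_peval, (peval_ext gam (fun k => (gam k - G n k) + G n k)%C) by (intros; ring).
  rewrite peval_add.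
  replace (peval (fun k => gam k - G n k)%C (S K) w + peval (G n) (S K) w - u)%C
    with (peval (fun k => gam k - G n k)%C (S K) w + (peval (G n) (S K) w - u))%C by ring.
  rewrite (HG n (S K)) by lia. eapply Rle_lt_trans; [apply Cmod_triangle|].
  pose proof (Cmod_peval_le rho (fun k => gam k - G n k)%C w (S K) Hw). specialize (Hgam n (S K)).
  lra.
Qed.

(** * The recurrence *)

Definition cpoly (f : nat -> R) (n : nat) (z : C) : C :=
  sum_n (fun k => RtoC (f k) * pow_n z (n - k) * pow_n (1 + z * z) k)%C n.

Definition shift (f : nat -> R) (k : nat) : R := match k with O => 0 | S k' => f k' end.

Lemma cpoly_0 f z : cpoly f 0 z = RtoC (f 0%nat).
Proof. unfold cpoly. rewrite sum_O. simpl. to_C_ops. ring. Qed.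

Lemma cpoly_S f n z :
  cpoly f (S n) z = (z * cpoly f n z + RtoC (f (S n)) * pow_n (1 + z * z) (S n))%C.
Proof.
  unfold cpoly. rewrite sum_Sn, Nat.sub_diag. to_C_ops. f_equal.
  - rewrite <- (sum_n_mult_l (K := C_Ring)). apply sum_n_ext_loc. intros k Hk.
    replace (S n - k)%nat with (S (n - k)) by lia. simpl. to_C_ops. ring.
  - simpl. to_C_ops. ring.
Qed.

Lemma cpoly_S_top0 f n z : f (S n) = 0 -> cpoly f (S n) z = (z * cpoly f n z)%C.
Proof. intros H. rewrite cpoly_S, H. to_C_ops. ring. Qed.

Lemma cpoly_shift f n z : cpoly (shift f) (S n) z = ((1 + z * z) * cpoly f n z)%C.
Proof.
  unfold cpoly, sum_n. rewrite sum_Sn_m, <- sum_n_m_S by lia. simpl shift. to_C_ops.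
  rewrite <- (sum_n_m_mult_l (K := C_Ring)).
  replace (RtoC 0 * pow_n z (S n - 0) * pow_n (1 + z * z) 0)%C with (RtoC 0) by ring.
  rewrite Cplus_0_l. apply sum_n_m_ext_loc. intros k Hk.
  replace (S n - S k)%nat with (n - k)%nat by lia. simpl. to_C_ops. ring.
Qed.

Lemma cpoly_ext f g n z : (forall k, f k = g k) -> cpoly f n z = cpoly g n z.
Proof. intros H. apply sum_n_ext. intros k. now rewrite H. Qed.

Lemma cpoly_lincomb u v w c d e n z : e <> 0 ->
  cpoly (fun k => (u k - c * v k - d * w k) / e) n z =
  ((cpoly u n z - RtoC c * cpoly v n z - RtoC d * cpoly w n z) / RtoC e)%C.
Proof.
  intros He. assert (He' : RtoC e <> RtoC 0) by (intros H; apply He; now injection H).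
  induction n as [|n IH].
  - rewrite !cpoly_0, RtoC_div, !RtoC_minus, !RtoC_mult by easy. reflexivity.
  - rewrite !cpoly_S, IH, RtoC_div, !RtoC_minus, !RtoC_mult by easy. field. easy.
Qed.

Section Recurrence.
Variables (a b : nat -> R).
Hypothesis ha : forall n, (1 <= n)%nat -> 0 < a n.

Definition qcoef (n : nat) : nat -> R := snd (jcoef a b n).

Lemma jcoef_S m : jcoef a b (S m) =
  (fun k => (shift (pcoef a b m) k - b (S m) * pcoef a b m k - a0 a m * qcoef m k) / a (S m),
   pcoef a b m).
Proof. unfold pcoef, qcoef. simpl. now destruct (jcoef a b m). Qed.

Lemma pcoef_S m k : pcoef a b (S m) k =
  (shift (pcoef a b m) k - b (S m) * pcoef a b m k - a0 a m * qcoef m k) / a (S m).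
Proof. unfold pcoef at 1. now rewrite jcoef_S. Qed.

Lemma qcoef_S m : qcoef (S m) = pcoef a b m.
Proof. unfold qcoef. now rewrite jcoef_S. Qed.

Lemma pcoef_qcoef_degree n :
  (forall k, (n < k)%nat -> pcoef a b n k = 0) /\ (forall k, (n <= k)%nat -> qcoef n k = 0).
Proof.
  induction n as [|n [IHp IHq]]; split; intros k Hk.
  - unfold pcoef. simpl. destruct k; [lia | reflexivity].
  - reflexivity.
  - rewrite pcoef_S, IHp, IHq by lia. destruct k as [|k]; [lia|]. simpl.
    rewrite IHp by lia. field. apply Rgt_not_eq, ha. lia.
  - rewrite qcoef_S. apply IHp. lia.
Qed.

Lemma cn_cpoly n z : cn a b n z = cpoly (pcoef a b n) n z.
Proof. reflexivity. Qed.

Definition cprev (m : nat) (z : C) : C := match m with O => RtoC 0 | S m' => cn a b m' z end.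

Lemma cn_S m z : cn a b (S m) z =
  (((1 + z * z - RtoC (b (S m)) * z) * cn a b m z - RtoC (a0 a m) * z * z * cprev m z)
   / RtoC (a (S m)))%C.
Proof.
  assert (Ha : a (S m) <> 0) by (apply Rgt_not_eq, ha; lia).
  rewrite !cn_cpoly, (cpoly_ext _ _ _ _ (pcoef_S m)), cpoly_lincomb, cpoly_shift by easy.
  destruct (pcoef_qcoef_degree m) as [Hp Hq].
  rewrite (cpoly_S_top0 (pcoef a b m)), (cpoly_S_top0 (qcoef m)) by (apply Hp || apply Hq; lia).
  destruct m as [|m].
  - rewrite cpoly_0. unfold qcoef. simpl. rewrite cpoly_0. f_equal. ring.
  - rewrite qcoef_S, (cpoly_S_top0 (pcoef a b m)) by (apply (pcoef_qcoef_degree m); lia).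
    simpl cprev. rewrite cn_cpoly. f_equal. ring.
Qed.

Lemma cn_0 z : cn a b 0 z = RtoC 1.
Proof. apply cpoly_0. Qed.

Lemma gn_0 z : gn a b 0 z = RtoC 1.
Proof. apply cn_0. Qed.

Lemma cn_gn n z : cn a b (S n) z = (gn a b (S n) z + RtoC (a (S n)) * z * z * cn a b n z)%C.
Proof. simpl gn. ring. Qed.

Lemma gn_S_sub n z : (gn a b (S n) z - gn a b n z)%C =
  (((1 - RtoC (a (S n))) * gn a b n z
    + ((1 - RtoC (a (S n)) * RtoC (a (S n))) * z * z - RtoC (b (S n)) * z) * cn a b n z)
   / RtoC (a (S n)))%C.
Proof.
  assert (Ha : RtoC (a (S n)) <> RtoC 0).
  { intros H. injection H. apply Rgt_not_eq, ha. lia. }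
  destruct n as [|m]; simpl gn; rewrite cn_S; simpl cprev; simpl a0.
  - rewrite cn_0. field. easy.
  - field. easy.
Qed.

End Recurrence.

Section Continuity.
Variables (a b : nat -> R).
Hypothesis ha : forall n, (1 <= n)%nat -> 0 < a n.

Lemma cn_Ccontinuous z n : Ccontinuous (cn a b n) z /\ Ccontinuous (cprev a b n) z.
Proof.
  induction n as [|n [IHc IHp]].
  - split; [|apply Ccontinuous_const].
    apply (Ccontinuous_ext (fun _ => RtoC 1));
      [intros; symmetry; apply cn_0 | apply Ccontinuous_const].
  - split; [|exact IHc].
    apply (Ccontinuous_ext (fun w => ((1 + w * w - RtoC (b (S n)) * w) * cn a b n w
                           - RtoC (a0 a n) * w * w * cprev a b n w) / RtoC (a (S n)))%C).
    + intros w. symmetry. now apply cn_S.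
    + Ccontinuity.
Qed.

Lemma gn_Ccontinuous z n : Ccontinuous (gn a b n) z.
Proof.
  destruct n as [|n].
  - apply (Ccontinuous_ext (fun _ => RtoC 1));
      [intros; symmetry; apply gn_0 | apply Ccontinuous_const].
  - destruct (cn_Ccontinuous z n) as [Hc _]. destruct (cn_Ccontinuous z (S n)) as [Hc1 _].
    change (Ccontinuous (fun w => cn a b (S n) w - RtoC (a (S n)) * w * w * cn a b n w)%C z).
    Ccontinuity.
Qed.

End Continuity.

Lemma jdev_ge0 a b n : 0 <= jdev a b n.
Proof. unfold jdev. pose proof (Rabs_pos (b n)). pose proof (Rabs_pos (a n ^ 2 - 1)). lra. Qed.

Lemma a_le_1_plus_jdev a b n : 0 < a n -> a n <= 1 + jdev a b n.
Proof.
  intros H. unfold jdev. pose proof (Rabs_pos (b n)). pose proof (Rle_abs (a n ^ 2 - 1)).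
  pose proof (Rabs_pos (a n ^ 2 - 1)). destruct (Rle_dec (a n) 1); nra.
Qed.

Lemma Rabs_1_minus_a_le_jdev a b n : 0 < a n -> Rabs (1 - a n) <= jdev a b n.
Proof.
  intros H. unfold jdev. pose proof (Rabs_pos (b n)).
  assert (Rabs (1 - a n) <= Rabs (a n ^ 2 - 1)).
  { destruct (Rle_dec (a n) 1).
    - rewrite Rabs_right, Rabs_left1 by nra. nra.
    - rewrite Rabs_left1, Rabs_right by nra. nra. }
  lra.
Qed.

Lemma jdev_weighted_bound a b n t : 0 <= t ->
  Rabs (1 - a n ^ 2) * t ^ 2 + Rabs (b n) * t <= jdev a b n * (t ^ 2 + t).
Proof.
  intros Ht. unfold jdev. rewrite <- Rabs_Ropp, Ropp_minus_distr.
  pose proof (Rabs_pos (b n)). pose proof (Rabs_pos (a n ^ 2 - 1)). nra.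
Qed.

Lemma a_lower_bound a b : (forall n, (1 <= n)%nat -> 0 < a n) ->
  ex_series (fun n => jdev a b (S n)) -> exists m, 0 < m /\ forall n, m <= a (S n).
Proof.
  intros ha Hs. apply ex_series_lim_0, is_lim_seq_spec in Hs.
  destruct (Hs (mkposreal (1/2) ltac:(lra))) as [N HN]. simpl in HN.
  assert (Htail : forall n, (N <= n)%nat -> 1/2 <= a (S n)).
  { intros n Hn. specialize (HN n Hn). pose proof (ha (S n) ltac:(lia)).
    pose proof (jdev_ge0 a b (S n)). rewrite Rminus_0_r, Rabs_right in HN by lra.
    unfold jdev in HN. pose proof (Rabs_pos (b (S n))).
    pose proof (Rle_abs (- (a (S n) ^ 2 - 1))). rewrite Rabs_Ropp in *. nra. }
  assert (Hhead : forall K, exists m, 0 < m /\ forall n, (n < K)%nat -> m <= a (S n)).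
  { induction K as [|K [m [Hm HK]]].
    - exists 1. split; [lra | intros; lia].
    - exists (Rmin m (a (S K))). split; [apply Rmin_pos; auto; apply ha; lia|].
      intros n Hn. destruct (Nat.eq_dec n K) as [->|]; [apply Rmin_r|].
      eapply Rle_trans; [apply Rmin_l | apply HK; lia]. }
  destruct (Hhead N) as [m [Hm HK]]. exists (Rmin m (1/2)). split; [apply Rmin_pos; lra|].
  intros n. destruct (Nat.lt_ge_cases n N).
  - eapply Rle_trans; [apply Rmin_l | auto].
  - eapply Rle_trans; [apply Rmin_r | auto].
Qed.

(** * Growth estimates *)

Section Growth.
Variables (a b : nat -> R) (t m : R).
Hypothesis ht : 0 <= t.
Hypothesis hm : 0 < m.
Hypothesis ham : forall n, m <= a (S n).

Fixpoint cgrowth (n : nat) : R :=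
  match n with O => 1 | S k => 1 + a (S k) * t ^ 2 * cgrowth k end.

Definition rate (n : nat) : R := jdev a b (S n) * (1 + t + t ^ 2) * (1 + cgrowth n) / m.

Lemma cgrowth_ge1 n : 1 <= cgrowth n.
Proof.
  induction n; simpl; [lra|].
  specialize (ham n). assert (0 <= a (S n) * t ^ 2) by nra. nra.
Qed.

Lemma rate_ge0 n : 0 <= rate n.
Proof.
  unfold rate. pose proof (jdev_ge0 a b (S n)). pose proof (cgrowth_ge1 n).
  apply Rdiv_le_0_compat; [|lra]. assert (0 <= 1 + t + t ^ 2) by nra.
  apply Rmult_le_pos; [apply Rmult_le_pos|]; lra.
Qed.

Fixpoint tsq_sum (n : nat) : R := match n with O => 1 | S k => 1 + t ^ 2 * tsq_sum k end.

Lemma tsq_sum_ge1 n : 1 <= tsq_sum n.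
Proof. induction n; simpl; [lra|]. assert (0 <= t ^ 2) by nra. nra. Qed.

Lemma cgrowth_le n : cgrowth n <= prod1p (fun k => jdev a b (S k)) n * tsq_sum n.
Proof.
  induction n; simpl; [lra|].
  pose proof (ham n). pose proof (a_le_1_plus_jdev a b (S n) ltac:(lra)).
  pose proof (prod1p_ge1 (fun k => jdev a b (S k)) n (fun k => jdev_ge0 a b (S k))).
  pose proof (jdev_ge0 a b (S n)). pose proof (tsq_sum_ge1 n). pose proof (cgrowth_ge1 n).
  set (P := prod1p (fun k => jdev a b (S k)) n) in *. set (J := jdev a b (S n)) in *.
  assert (0 <= t ^ 2) by nra.
  assert (a (S n) * t ^ 2 * cgrowth n <= (1 + J) * t ^ 2 * (P * tsq_sum n))
    by (apply Rmult_le_compat; nra).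
  assert (0 <= P * (1 + J) * t ^ 2 * tsq_sum n)
    by (apply Rmult_le_pos; [|lra]; apply Rmult_le_pos; nra).
  nra.
Qed.

Lemma tsq_sum_le_lt1 n : t < 1 -> tsq_sum n <= / (1 - t ^ 2).
Proof.
  intros Ht1. assert (0 <= t ^ 2 < 1) by nra.
  apply (Rmult_le_reg_r (1 - t ^ 2)); [lra|]. rewrite Rinv_l by lra.
  induction n; simpl; nra.
Qed.

Lemma tsq_sum_le_ge1 n : 1 <= t -> tsq_sum n <= INR (S n) * t ^ (2 * n).
Proof.
  intros Ht1. induction n; simpl tsq_sum; [simpl; lra|].
  replace (2 * S n)%nat with (S (S (2 * n))) by lia.
  change (t ^ S (S (2 * n))) with (t * (t * t ^ (2 * n))).
  assert (1 <= t ^ (2 * n)) by (apply pow_R1_Rle; lra).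
  pose proof (pos_INR n). rewrite !S_INR in *.
  assert (t ^ 2 * tsq_sum n <= t ^ 2 * ((INR n + 1) * t ^ (2 * n)))
    by (apply Rmult_le_compat_l; nra).
  assert (1 <= t * (t * t ^ (2 * n))) by nra.
  replace ((INR n + 1 + 1) * (t * (t * t ^ (2 * n))))
    with (t ^ 2 * ((INR n + 1) * t ^ (2 * n)) + t * (t * t ^ (2 * n))) by ring.
  lra.
Qed.

Section Summability.
Hypothesis hs : ex_series (fun n => jdev a b (S n)).
Let P := exp (Series (fun n => jdev a b (S n))).

Lemma rate_le n : rate n <= jdev a b (S n) * ((1 + t + t ^ 2) * (1 + P * tsq_sum n) / m).
Proof.
  unfold rate. replace (jdev a b (S n) * ((1 + t + t ^ 2) * (1 + P * tsq_sum n) / m))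
    with (jdev a b (S n) * (1 + t + t ^ 2) * (1 + P * tsq_sum n) / m) by (unfold Rdiv; ring).
  apply Rdiv_le_compat_lower; [|lra]. pose proof (jdev_ge0 a b (S n)).
  assert (0 <= jdev a b (S n) * (1 + t + t ^ 2)) by (apply Rmult_le_pos; nra).
  pose proof (cgrowth_ge1 n). split; [nra|]. apply Rmult_le_compat_l; [easy|].
  apply Rplus_le_compat_l. eapply Rle_trans; [apply cgrowth_le|].
  apply Rmult_le_compat_r; [pose proof (tsq_sum_ge1 n); lra|].
  apply prod1p_le_exp_Series; [intros; apply jdev_ge0 | easy].
Qed.

Lemma ex_series_rate_lt1 : t < 1 -> ex_series rate.
Proof.
  intros Ht1. apply (ex_series_le_nonneg _ (fun n => jdev a b (S n)
    * ((1 + t + t ^ 2) * (1 + P * / (1 - t ^ 2)) / m))); [|now apply ex_series_scal_r].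
  intros n. split; [apply rate_ge0|]. eapply Rle_trans; [apply rate_le|].
  apply Rmult_le_compat_l; [apply jdev_ge0|].
  apply Rmult_le_compat_r; [apply Rlt_le, Rinv_0_lt_compat; lra|].
  apply Rmult_le_compat_l; [nra|]. apply Rplus_le_compat_l, Rmult_le_compat_l.
  - apply Rlt_le, exp_pos.
  - now apply tsq_sum_le_lt1.
Qed.

Lemma ex_series_rate_ge1 : 1 <= t ->
  ex_series (fun n => jdev a b (S n) * (INR (S n) * t ^ (2 * n))) -> ex_series rate.
Proof.
  intros Ht1 Hs2. set (c := (1 + t + t ^ 2) / m).
  apply (ex_series_le_nonneg _ (fun n => (jdev a b (S n)
    + jdev a b (S n) * (INR (S n) * t ^ (2 * n)) * P) * c)).
  - intros n. split; [apply rate_ge0|]. eapply Rle_trans; [apply rate_le|].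
    pose proof (jdev_ge0 a b (S n)). assert (0 < P) by apply exp_pos.
    assert (0 <= c) by (unfold c; apply Rdiv_le_0_compat; nra).
    assert (tsq_sum n <= INR (S n) * t ^ (2 * n)) by now apply tsq_sum_le_ge1.
    unfold c, Rdiv.
    replace (jdev a b (S n) * ((1 + t + t ^ 2) * (1 + P * tsq_sum n) * / m))
      with ((jdev a b (S n) + jdev a b (S n) * tsq_sum n * P) * ((1 + t + t ^ 2) * / m)) by ring.
    apply Rmult_le_compat_r; [easy|]. apply Rplus_le_compat_l.
    apply Rmult_le_compat_r; [lra|]. now apply Rmult_le_compat_l.
  - apply ex_series_scal_r. apply (ex_series_plus (K := R_AbsRing) (V := R_NormedModule)); [easy|].
    now apply ex_series_scal_r.
Qed.

End Summability.

(* [x], [y], [d] stand for [|c_n|], [|g_n|], [|g_(n+1) - g_n|] at a point [|z| <= t], or for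
   weighted norms of the Taylor coefficients of these functions; [hx], [hd], [hy] are what
   [cn_gn] and [gn_S_sub] give. *)
Section Recursion.
Variables (x y d : nat -> R).
Hypothesis hx_ge0 : forall n, 0 <= x n.
Hypothesis hy_ge0 : forall n, 0 <= y n.
Hypothesis hx0 : x 0%nat <= 1.
Hypothesis hy0 : y 0%nat <= 1.
Hypothesis hx : forall n, x (S n) <= y (S n) + a (S n) * t ^ 2 * x n.
Hypothesis hd : forall n, d n <= (Rabs (1 - a (S n)) * y n
  + (Rabs (1 - a (S n) ^ 2) * t ^ 2 + Rabs (b (S n)) * t) * x n) / a (S n).
Hypothesis hy : forall n, y (S n) <= y n + d n.

Lemma diff_le_rate_mul n : forall Y, y n <= Y -> x n <= cgrowth n * Y -> d n <= rate n * Y.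
Proof.
  intros Y HyY HxY. pose proof (ham n).
  pose proof (Rabs_1_minus_a_le_jdev a b (S n) ltac:(lra)) as HA.
  pose proof (jdev_weighted_bound a b (S n) t ht) as HE.
  pose proof (Rabs_pos (1 - a (S n))). pose proof (cgrowth_ge1 n).
  pose proof (hy_ge0 n). pose proof (hx_ge0 n).
  set (J := jdev a b (S n)) in *. set (L := cgrowth n) in *.
  set (E := Rabs (1 - a (S n) ^ 2) * t ^ 2 + Rabs (b (S n)) * t) in *.
  assert (0 <= E) by (unfold E; pose proof (Rabs_pos (1 - a (S n) ^ 2));
                      pose proof (Rabs_pos (b (S n))); nra).
  assert (Rabs (1 - a (S n)) * y n <= J * Y) by (apply Rmult_le_compat; lra).
  assert (E * x n <= J * (t ^ 2 + t) * (L * Y)) by (apply Rmult_le_compat; lra).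
  eapply Rle_trans; [apply hd|]. unfold rate. fold J L E.
  replace (J * (1 + t + t ^ 2) * (1 + L) / m * Y) with (J * (1 + t + t ^ 2) * (1 + L) * Y / m)
    by (field; lra).
  apply Rdiv_le_compat_lower; [|lra].
  assert (0 <= J) by apply jdev_ge0.
  split; [apply Rplus_le_le_0_compat; apply Rmult_le_pos; lra|].
  assert (0 <= J * Y * (L + t + t ^ 2)) by (apply Rmult_le_pos; [apply Rmult_le_pos|]; nra).
  replace (J * (1 + t + t ^ 2) * (1 + L) * Y)
    with (J * Y + J * (t ^ 2 + t) * (L * Y) + J * Y * (L + t + t ^ 2)) by ring.
  lra.
Qed.

Lemma growth_bound n :
  y n <= prod1p rate n /\ x n <= cgrowth n * prod1p rate n /\ d n <= rate n * prod1p rate n.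
Proof.
  assert (HY : forall n, 1 <= prod1p rate n) by (intros; apply prod1p_ge1, rate_ge0).
  induction n as [|n [IHy [IHx IHd]]].
  - simpl. repeat split; try lra. apply diff_le_rate_mul; simpl; lra.
  - assert (Hy1 : y (S n) <= prod1p rate (S n)).
    { simpl. pose proof (hy n). pose proof (rate_ge0 n). pose proof (HY n). nra. }
    assert (Hx1 : x (S n) <= cgrowth (S n) * prod1p rate (S n)).
    { pose proof (hx n). pose proof (ham n). pose proof (HY n). pose proof (rate_ge0 n).
      assert (prod1p rate n <= prod1p rate (S n)) by (simpl; nra).
      assert (a (S n) * t ^ 2 * x n <= a (S n) * t ^ 2 * (cgrowth n * prod1p rate (S n)))
        by (apply Rmult_le_compat_l; [nra|]; pose proof (cgrowth_ge1 n); nra).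
      simpl cgrowth. lra. }
    repeat split; auto. now apply diff_le_rate_mul.
Qed.

Lemma diff_le_rate_exp n : ex_series rate -> d n <= rate n * exp (Series rate).
Proof.
  intros Hr. eapply Rle_trans; [apply growth_bound|].
  apply Rmult_le_compat_l; [apply rate_ge0|]. apply prod1p_le_exp_Series; [apply rate_ge0 | easy].
Qed.

End Recursion.
End Growth.

Section Values.
Variables (a b : nat -> R).
Hypothesis ha : forall n, (1 <= n)%nat -> 0 < a n.

Lemma cn_Cmod_step t z n : Cmod z <= t ->
  Cmod (cn a b (S n) z) <= Cmod (gn a b (S n) z) + a (S n) * t ^ 2 * Cmod (cn a b n z).
Proof.
  intros Hz. rewrite cn_gn. eapply Rle_trans; [apply Cmod_triangle|].
  apply Rplus_le_compat_l.
  rewrite !Cmod_mult, Cmod_R, Rabs_right by (apply Rle_ge, Rlt_le, ha; lia).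
  pose proof (Cmod_ge_0 z). pose proof (Cmod_ge_0 (cn a b n z)). pose proof (ha (S n) ltac:(lia)).
  apply Rmult_le_compat_r; [easy|]. rewrite Rmult_assoc. apply Rmult_le_compat_l; [lra|].
  simpl. rewrite Rmult_1_r. now apply Rmult_le_compat.
Qed.

Lemma gn_diff_Cmod_le t z n : Cmod z <= t ->
  Cmod (gn a b (S n) z - gn a b n z)%C <=
  (Rabs (1 - a (S n)) * Cmod (gn a b n z)
   + (Rabs (1 - a (S n) ^ 2) * t ^ 2 + Rabs (b (S n)) * t) * Cmod (cn a b n z)) / a (S n).
Proof.
  intros Hz. pose proof (ha (S n) ltac:(lia)) as Ha.
  rewrite (gn_S_sub a b ha), Cmod_div by (intros H; injection H; lra).
  rewrite Cmod_R, (Rabs_right (a (S n))) by lra.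
  apply Rmult_le_compat_r; [apply Rlt_le, Rinv_0_lt_compat; lra|].
  eapply Rle_trans; [apply Cmod_triangle|]. rewrite !Cmod_mult.
  replace (1 - RtoC (a (S n)))%C with (RtoC (1 - a (S n))) by now rewrite RtoC_minus.
  replace (1 - RtoC (a (S n)) * RtoC (a (S n)))%C with (RtoC (1 - a (S n) ^ 2))
    by (apply injective_projections; simpl; ring).
  rewrite Cmod_R. apply Rplus_le_compat_l, Rmult_le_compat_r; [apply Cmod_ge_0|].
  eapply Rle_trans; [apply Cmod_triangle|]. rewrite Cmod_opp, !Cmod_mult, !Cmod_R.
  pose proof (Cmod_ge_0 z). pose proof (Rabs_pos (1 - a (S n) ^ 2)).
  pose proof (Rabs_pos (b (S n))).
  apply Rplus_le_compat; [|now apply Rmult_le_compat_l].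
  rewrite Rmult_assoc. apply Rmult_le_compat_l; [easy|]. simpl. rewrite Rmult_1_r.
  now apply Rmult_le_compat.
Qed.

Lemma gn_diff_le_rate t m z n : 0 <= t -> 0 < m -> (forall n, m <= a (S n)) -> Cmod z <= t ->
  ex_series (rate a b t m) ->
  Cmod (gn a b (S n) z - gn a b n z)%C <= rate a b t m n * exp (Series (rate a b t m)).
Proof.
  intros Ht Hm Ham Hz Hr.
  apply (diff_le_rate_exp a b t m Ht Hm Ham (fun n => Cmod (cn a b n z))
    (fun n => Cmod (gn a b n z)) (fun n => Cmod (gn a b (S n) z - gn a b n z)%C));
    intros; try apply Cmod_ge_0; auto.
  - rewrite cn_0, Cmod_1. lra.
  - rewrite gn_0, Cmod_1. lra.
  - now apply cn_Cmod_step.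
  - now apply gn_diff_Cmod_le.
  - apply Cmod_le_add_sub.
Qed.

Lemma gn_unif_cv_closed_ball t m : 0 <= t -> 0 < m -> (forall n, m <= a (S n)) ->
  ex_series (rate a b t m) -> unif_cv_on (gn a b) (ulim (gn a b)) (fun z => Cmod z <= t).
Proof.
  intros Ht Hm Ham Hr.
  apply (unif_cv_on_ulim _ _ (fun n => rate a b t m n * exp (Series (rate a b t m)))).
  - intros n. pose proof (rate_ge0 a b t m Ht Hm Ham n).
    pose proof (exp_pos (Series (rate a b t m))). nra.
  - now apply ex_series_scal_r.
  - intros n z Hz. now apply gn_diff_le_rate.
Qed.

End Values.

Section Boundary.
Variables (a b : nat -> R).
Hypothesis ha : forall n, (1 <= n)%nat -> 0 < a n.

Definition defect (n : nat) (z : C) : C := ((1 - z * z) * cn a b n z - gn a b n z)%C.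

Lemma defect_S_Cmod_le z n : Cmod (defect (S n) z) <=
  Cmod (z * z)%C * (Cmod (defect n z) + Cmod (gn a b (S n) z - gn a b n z)%C)
  + Cmod (1 - z * z)%C * Rabs (1 - a (S n)) * Cmod (z * z)%C * Cmod (cn a b n z).
Proof.
  unfold defect. rewrite cn_gn.
  replace ((1 - z * z) * (gn a b (S n) z + RtoC (a (S n)) * z * z * cn a b n z) - gn a b (S n) z)%C
    with ((z * z) * (((1 - z * z) * cn a b n z - gn a b n z) - (gn a b (S n) z - gn a b n z))
          + (1 - z * z) * RtoC (- (1 - a (S n))) * (z * z) * cn a b n z)%C
    by (rewrite RtoC_opp, RtoC_minus; ring).
  eapply Rle_trans; [apply Cmod_triangle|]. apply Rplus_le_compat.
  - rewrite Cmod_mult. apply Rmult_le_compat_l; [apply Cmod_ge_0|].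
    unfold Cminus at 1. eapply Rle_trans; [apply Cmod_triangle|]. rewrite Cmod_opp. lra.
  - rewrite !Cmod_mult, Cmod_R, Rabs_Ropp. lra.
Qed.

Definition defect_mass (n : nat) (z : C) : R := Cmod (defect n z) + Cmod (gn a b n z).

Lemma cn_Cmod_mul_le_mass dl z n :
  dl <= Cmod (1 - z * z)%C -> Cmod (cn a b n z) * dl <= defect_mass n z.
Proof.
  intros Hz. apply Rle_trans with (Cmod (cn a b n z) * Cmod (1 - z * z)%C);
    [apply Rmult_le_compat_l; [apply Cmod_ge_0 | easy]|].
  rewrite Rmult_comm, <- Cmod_mult. eapply Rle_trans; [|apply Cmod_triangle].
  right. f_equal. unfold defect. ring.
Qed.

Variables (m dl : R).
Hypothesis hm : 0 < m.
Hypothesis ham : forall n, m <= a (S n).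
Hypothesis hdl : 0 < dl.

Definition brate (n : nat) : R := jdev a b (S n) * (2 * (1 + 2 / dl) / m + 2 / dl).

Lemma brate_ge0 n : 0 <= brate n.
Proof.
  unfold brate. apply Rmult_le_pos; [apply jdev_ge0|].
  assert (0 < 2 / dl) by (apply Rdiv_lt_0_compat; lra).
  assert (0 < 2 * (1 + 2 / dl) / m) by (apply Rdiv_lt_0_compat; lra). lra.
Qed.

Section Point.
Variable z : C.
Hypothesis hz : boundary_region dl z.

Lemma cn_Cmod_le_mass n : Cmod (cn a b n z) <= defect_mass n z / dl.
Proof.
  apply (Rmult_le_reg_r dl); [easy|]. unfold Rdiv. rewrite Rmult_assoc, Rinv_l, Rmult_1_r by lra.
  now apply cn_Cmod_mul_le_mass, hz.
Qed.

Lemma gn_diff_le_mass n :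
  Cmod (gn a b (S n) z - gn a b n z)%C <= jdev a b (S n) * (1 + 2 / dl) / m * defect_mass n z.
Proof.
  pose proof (ham n) as Ham. set (M := defect_mass n z).
  pose proof (Rabs_1_minus_a_le_jdev a b (S n) ltac:(lra)) as HA.
  pose proof (jdev_weighted_bound a b (S n) 1 ltac:(lra)) as HE.
  pose proof (cn_Cmod_mul_le_mass dl z n (proj2 hz)) as Hcd. fold M in Hcd.
  pose proof (Cmod_ge_0 (defect n z)). pose proof (Cmod_ge_0 (gn a b n z)).
  pose proof (Cmod_ge_0 (cn a b n z)). pose proof (Rabs_pos (1 - a (S n))).
  pose proof (jdev_ge0 a b (S n)).
  assert (HM : Cmod (gn a b n z) <= M) by (unfold M, defect_mass; lra).
  eapply Rle_trans; [apply (gn_diff_Cmod_le a b ha 1), hz|].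
  replace (jdev a b (S n) * (1 + 2 / dl) / m * M)
    with (jdev a b (S n) * M * (1 + 2 / dl) / m) by (field; lra).
  apply Rdiv_le_compat_lower; [|lra]. split.
  - apply Rplus_le_le_0_compat; apply Rmult_le_pos; try lra.
    pose proof (Rabs_pos (1 - a (S n) ^ 2)). pose proof (Rabs_pos (b (S n))). nra.
  - assert (Rabs (1 - a (S n)) * Cmod (gn a b n z) <= jdev a b (S n) * M)
      by (apply Rmult_le_compat; lra).
    assert ((Rabs (1 - a (S n) ^ 2) * 1 ^ 2 + Rabs (b (S n)) * 1) * Cmod (cn a b n z)
            <= jdev a b (S n) * 2 * Cmod (cn a b n z)) by (apply Rmult_le_compat_r; lra).
    assert (jdev a b (S n) * 2 * Cmod (cn a b n z) <= jdev a b (S n) * M * (2 / dl)).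
    { apply (Rmult_le_reg_r dl); [easy|].
      replace (jdev a b (S n) * M * (2 / dl) * dl) with (jdev a b (S n) * 2 * M) by (field; lra).
      rewrite Rmult_assoc. apply Rmult_le_compat_l; lra. }
    lra.
Qed.

Lemma defect_mass_S_le n : defect_mass (S n) z <= defect_mass n z * (1 + brate n).
Proof.
  pose proof (gn_diff_le_mass n) as Hd. pose proof (defect_S_Cmod_le z n) as Hdef.
  pose proof (Cmod_le_add_sub (gn a b (S n) z) (gn a b n z)) as Hg.
  pose proof (cn_Cmod_le_mass n) as Hc.
  pose proof (Rabs_1_minus_a_le_jdev a b (S n) ltac:(pose proof (ham n); lra)) as HA.
  destruct hz as [Hz1 Hz2].
  assert (Hzz : Cmod (z * z)%C <= 1) by (rewrite Cmod_sqr; pose proof (Cmod_ge_0 z); nra).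
  assert (H1zz : Cmod (1 - z * z)%C <= 2).
  { unfold Cminus. eapply Rle_trans; [apply Cmod_triangle|]. rewrite Cmod_opp, Cmod_1. lra. }
  pose proof (Cmod_ge_0 (z * z)%C). pose proof (Cmod_ge_0 (1 - z * z)%C).
  pose proof (Cmod_ge_0 (cn a b n z)). pose proof (Rabs_pos (1 - a (S n))).
  pose proof (Cmod_ge_0 (defect n z)). pose proof (Cmod_ge_0 (gn a b (S n) z - gn a b n z)%C).
  pose proof (jdev_ge0 a b (S n)).
  set (J := jdev a b (S n)) in *. set (d := Cmod (gn a b (S n) z - gn a b n z)%C) in *.
  set (c := Cmod (cn a b n z)) in *. set (M := defect_mass n z) in *.
  assert (Hdef' : Cmod (defect (S n) z) <= Cmod (defect n z) + d + 2 * J * c).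
  { eapply Rle_trans; [apply Hdef|]. apply Rplus_le_compat.
    - rewrite <- (Rmult_1_l (_ + d)) at 2. apply Rmult_le_compat_r; lra.
    - replace (2 * J * c) with (2 * J * 1 * c) by ring.
      apply Rmult_le_compat_r; [easy|]. apply Rmult_le_compat; [nra | easy | | easy].
      now apply Rmult_le_compat. }
  assert (HJc : J * c <= J * (M / dl)) by (apply Rmult_le_compat_l; lra).
  assert (HM : M = Cmod (defect n z) + Cmod (gn a b n z)) by reflexivity.
  unfold defect_mass at 1. unfold brate. fold J.
  replace (M * (1 + J * (2 * (1 + 2 / dl) / m + 2 / dl)))
    with (M + 2 * (J * (1 + 2 / dl) / m * M) + 2 * (J * (M / dl))) by (field; lra).
  lra.
Qed.

Lemma defect_mass_le : ex_series (fun n => jdev a b (S n)) ->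
  forall n, defect_mass n z <= 2 * exp (Series brate).
Proof.
  intros Hs n. assert (Hb : ex_series brate) by now apply ex_series_scal_r.
  eapply Rle_trans;
    [apply (le_prod1p_of_step brate (fun n => defect_mass n z) 2 n brate_ge0 defect_mass_S_le)|].
  - unfold defect_mass, defect. rewrite cn_0, gn_0.
    replace ((1 - z * z) * 1 - 1)%C with (- (z * z))%C by ring.
    rewrite Cmod_opp, Cmod_sqr, Cmod_1. destruct hz as [Hz _]. pose proof (Cmod_ge_0 z). nra.
  - apply Rmult_le_compat_l; [lra|]. now apply prod1p_le_exp_Series; [apply brate_ge0|].
Qed.

End Point.

Definition bdiff (n : nat) : R := jdev a b (S n) * ((1 + 2 / dl) / m * (2 * exp (Series brate))).

Hypothesis hs : ex_series (fun n => jdev a b (S n)).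

Lemma ex_series_bdiff : ex_series bdiff.
Proof. now apply ex_series_scal_r. Qed.

Lemma bdiff_ge0 n : 0 <= bdiff n.
Proof.
  unfold bdiff. apply Rmult_le_pos; [apply jdev_ge0|].
  assert (0 < 2 / dl) by (apply Rdiv_lt_0_compat; lra). pose proof (exp_pos (Series brate)).
  apply Rmult_le_pos; [apply Rdiv_le_0_compat|]; lra.
Qed.

Lemma gn_diff_le_bdiff z n : boundary_region dl z ->
  Cmod (gn a b (S n) z - gn a b n z)%C <= bdiff n.
Proof.
  intros Hz. eapply Rle_trans; [now apply gn_diff_le_mass|].
  unfold bdiff.
  replace (jdev a b (S n) * (1 + 2 / dl) / m) with (jdev a b (S n) * ((1 + 2 / dl) / m))
    by (unfold Rdiv; ring).
  rewrite Rmult_assoc. apply Rmult_le_compat_l; [apply jdev_ge0|].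
  apply Rmult_le_compat_l; [|now apply defect_mass_le].
  assert (0 < 2 / dl) by (apply Rdiv_lt_0_compat; lra). apply Rdiv_le_0_compat; lra.
Qed.

Lemma gn_unif_cv_boundary : unif_cv_on (gn a b) (ulim (gn a b)) (boundary_region dl).
Proof.
  apply (unif_cv_on_ulim _ _ bdiff bdiff_ge0 ex_series_bdiff). intros n z Hz.
  now apply gn_diff_le_bdiff.
Qed.

End Boundary.

(** * Convergence of g_n *)

Section Parts.
Variables (a b : nat -> R).
Hypothesis ha : forall n, (1 <= n)%nat -> 0 < a n.

Lemma gn_unif_cv_closed_disk : ex_series (fun n => INR (S n) * jdev a b (S n)) ->
  unif_cv_on (gn a b) (ulim (gn a b)) closed_disk.
Proof.
  intros Hs.
  assert (Hs1 : ex_series (fun n => jdev a b (S n))).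
  { refine (ex_series_le_nonneg _ _ _ Hs). intros n. pose proof (jdev_ge0 a b (S n)).
    split; [easy|]. rewrite S_INR. pose proof (pos_INR n). nra. }
  destruct (a_lower_bound a b ha Hs1) as [m [Hm Ham]].
  apply (gn_unif_cv_closed_ball a b ha 1 m ltac:(lra) Hm Ham).
  apply (ex_series_rate_ge1 a b 1 m ltac:(lra) Hm Ham Hs1 (Rle_refl 1)).
  eapply ex_series_ext; [|apply Hs]. intros n. simpl. rewrite pow1. ring.
Qed.

Lemma gn_unif_cv_disk_R C0 R0 : 1 < R0 ->
  (forall n, (1 <= n)%nat -> jdev a b n <= C0 * / R0 ^ (2 * n)) ->
  forall t, 1 <= t < R0 -> unif_cv_on (gn a b) (ulim (gn a b)) (fun z => Cmod z <= t).
Proof.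
  intros HR HJ t Ht. set (q := / R0 ^ 2).
  assert (Hq : 0 < q < 1).
  { unfold q. split; [apply Rinv_0_lt_compat; nra|].
    rewrite <- Rinv_1. apply Rinv_lt_contravar; nra. }
  assert (HJ' : forall n, jdev a b (S n) <= q ^ n * (C0 * q)).
  { intros n. replace (q ^ n * (C0 * q)) with (C0 * / R0 ^ (2 * S n)); [apply HJ; lia|].
    unfold q. rewrite pow_mult, <- pow_inv. simpl. ring. }
  assert (Hs1 : ex_series (fun n => jdev a b (S n))).
  { apply (ex_series_le_nonneg _ _ (fun n => conj (jdev_ge0 a b (S n)) (HJ' n))).
    apply ex_series_scal_r, ex_series_geom. rewrite Rabs_right; lra. }
  destruct (a_lower_bound a b ha Hs1) as [m [Hm Ham]].
  apply (gn_unif_cv_closed_ball a b ha t m ltac:(lra) Hm Ham).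
  apply (ex_series_rate_ge1 a b t m ltac:(lra) Hm Ham Hs1 (proj1 Ht)).
  assert (Hs : 0 < q * t ^ 2 < 1).
  { split; [apply Rmult_lt_0_compat; nra|]. unfold q.
    apply (Rmult_lt_reg_l (R0 ^ 2)); [nra|]. rewrite <- Rmult_assoc, Rinv_r by nra. nra. }
  apply (ex_series_le_nonneg _ (fun n => INR (S n) * (q * t ^ 2) ^ n * (C0 * q))).
  - intros n. pose proof (jdev_ge0 a b (S n)).
    assert (0 <= INR (S n) * t ^ (2 * n))
      by (apply Rmult_le_pos; [apply pos_INR | apply pow_le; lra]).
    split; [now apply Rmult_le_pos|].
    rewrite Rpow_mult_distr, <- pow_mult.
    replace (INR (S n) * (q ^ n * t ^ (2 * n)) * (C0 * q))
      with ((q ^ n * (C0 * q)) * (INR (S n) * t ^ (2 * n))) by ring.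
    now apply Rmult_le_compat_r.
  - now apply ex_series_scal_r, ex_series_succ_geom.
Qed.

Section PartI.
Hypothesis hs : ex_series (fun n => jdev a b (S n)).

Lemma gn_unif_cv_boundary_region dl : 0 < dl ->
  unif_cv_on (gn a b) (ulim (gn a b)) (boundary_region dl).
Proof.
  intros Hdl. destruct (a_lower_bound a b ha hs) as [m [Hm Ham]].
  now apply (gn_unif_cv_boundary a b ha m dl).
Qed.

Lemma ulim_continuous_pm1 : continuous_on_C (ulim (gn a b)) closed_disk_pm1.
Proof.
  intros z Hz. pose proof (one_minus_sqr_Cmod_pos z Hz) as Hpos.
  set (dl := Cmod (1 - z * z)%C / 2).
  apply (continuous_within_of_unif_cv (gn a b) _ _ (boundary_region dl)).
  - apply gn_unif_cv_boundary_region. unfold dl. lra.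
  - intros n. now apply gn_Ccontinuous.
  - split; [apply Hz | unfold dl; lra].
  - destruct (Ccontinuous_eps_delta _ z (Ccontinuous_one_minus_sqr z) dl ltac:(unfold dl; lra))
      as [d [Hd H]].
    exists d. split; [easy|]. intros w Hw Hwz. split; [apply Hw|].
    pose proof (Rabs_Cmod_sub_le (1 - w * w)%C (1 - z * z)%C).
    specialize (H w Hwz). apply Rabs_le_between in H0. unfold dl in *. lra.
Qed.

Lemma defect_lim_0 z : Cmod z < 1 -> is_lim_seq (fun n => Cmod (defect a b n z)) 0.
Proof.
  intros Hz. set (dl := Cmod (1 - z * z)%C).
  assert (Hdl : 0 < dl) by now apply one_minus_sqr_Cmod_pos, open_disk_pm1.
  assert (Hreg : boundary_region dl z) by (split; [lra | apply Rle_refl]).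
  destruct (a_lower_bound a b ha hs) as [m [Hm Ham]].
  set (B := 2 * exp (Series (brate a b m dl))). set (q := Cmod (z * z)%C).
  assert (Hq : 0 <= q < 1) by (unfold q; rewrite Cmod_sqr; pose proof (Cmod_ge_0 z); split; nra).
  apply (is_lim_seq_contraction_0 _ (fun n => q * (bdiff a b m dl n + jdev a b (S n) * B)) q Hq);
    [intros; apply Cmod_ge_0 | intros n |].
  - pose proof (defect_S_Cmod_le a b z n) as Hrec. fold q dl in Hrec.
    pose proof (gn_diff_le_bdiff a b ha m dl Hm Ham Hdl hs z n Hreg).
    pose proof (cn_Cmod_mul_le_mass a b dl z n (Rle_refl _)) as Hc.
    pose proof (defect_mass_le a b ha m dl Hm Ham Hdl z Hreg hs n) as HM. fold B in HM.
    pose proof (Rabs_1_minus_a_le_jdev a b (S n) ltac:(pose proof (Ham n); lra)).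
    pose proof (Rabs_pos (1 - a (S n))). pose proof (Cmod_ge_0 (cn a b n z)).
    assert (dl * Rabs (1 - a (S n)) * Cmod (cn a b n z) <= jdev a b (S n) * B).
    { replace (dl * Rabs (1 - a (S n)) * Cmod (cn a b n z))
        with (Rabs (1 - a (S n)) * (Cmod (cn a b n z) * dl)) by ring.
      apply Rmult_le_compat; try lra. apply Rmult_le_pos; lra. }
    nra.
  - replace 0 with (q * (0 + 0 * B)) by ring.
    apply is_lim_seq_mult', is_lim_seq_plus'; [apply is_lim_seq_const | |].
    + apply ex_series_lim_0, (ex_series_bdiff a b m dl hs).
    + apply is_lim_seq_mult'; [apply ex_series_lim_0, hs | apply is_lim_seq_const].
Qed.

Lemma cn_cv_open_disk z : open_disk z ->
  cv_C (fun n => cn a b n z) (ulim (gn a b) z / (1 - z * z))%C.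
Proof.
  intros Hz. unfold open_disk in Hz. set (dl := Cmod (1 - z * z)%C).
  assert (Hdl : 0 < dl) by now apply one_minus_sqr_Cmod_pos, open_disk_pm1.
  assert (Hne : (1 - z * z)%C <> RtoC 0)
    by (intros H; unfold dl in Hdl; rewrite H, Cmod_0 in Hdl; lra).
  intros eps Heps. pose proof (defect_lim_0 z Hz) as Hdef. apply is_lim_seq_spec in Hdef.
  destruct (Hdef (mkposreal (eps * dl / 2) ltac:(apply Rdiv_lt_0_compat; nra))) as [N1 HN1].
  destruct (gn_unif_cv_boundary_region dl Hdl (eps * dl / 2) ltac:(apply Rdiv_lt_0_compat; nra))
    as [N2 HN2].
  exists (N1 + N2)%nat. intros n Hn. specialize (HN1 n ltac:(lia)).
  specialize (HN2 n z ltac:(lia) (conj (Rlt_le _ _ Hz) (Rle_refl _))).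
  simpl in HN1. rewrite Rminus_0_r, Rabs_right in HN1 by apply Rle_ge, Cmod_ge_0.
  replace (cn a b n z - ulim (gn a b) z / (1 - z * z))%C
    with ((defect a b n z + (gn a b n z - ulim (gn a b) z)) / (1 - z * z))%C
    by (unfold defect; field; easy).
  rewrite Cmod_div by easy. fold dl. apply (Rmult_lt_reg_r dl); [easy|].
  unfold Rdiv. rewrite Rmult_assoc, Rinv_l, Rmult_1_r by lra.
  eapply Rle_lt_trans; [apply Cmod_triangle|]. lra.
Qed.

End PartI.
End Parts.

(** * Analyticity *)

Section Coefficients.
Variables (a b : nat -> R).
Hypothesis ha : forall n, (1 <= n)%nat -> 0 < a n.
Variable z0 : C.

(* Taylor coefficients in [w] of [c_n (z0 + w)] and [g_n (z0 + w)], generated by [cn_gn] and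
   [gn_S_sub]. *)
Fixpoint cg_coef (n : nat) : (nat -> C) * (nat -> C) :=
  match n with
  | O => (unit_coef, unit_coef)
  | S m =>
      let (c, g) := cg_coef m in
      let A := RtoC (a (S m)) in
      let g' := fun k => (g k + ((1 - A) * g k
                  + (1 - A * A) * mul_affine z0 (mul_affine z0 c) k
                  - RtoC (b (S m)) * mul_affine z0 c k) / A)%C in
      (fun k => (g' k + A * mul_affine z0 (mul_affine z0 c) k)%C, g')
  end.

Definition ccoef (n : nat) : nat -> C := fst (cg_coef n).
Definition gcoef (n : nat) : nat -> C := snd (cg_coef n).

Lemma gcoef_S m k : gcoef (S m) k = (gcoef m k + ((1 - RtoC (a (S m))) * gcoef m k
  + (1 - RtoC (a (S m)) * RtoC (a (S m))) * mul_affine z0 (mul_affine z0 (ccoef m)) k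
  - RtoC (b (S m)) * mul_affine z0 (ccoef m) k) / RtoC (a (S m)))%C.
Proof. unfold gcoef, ccoef. simpl. now destruct (cg_coef m). Qed.

Lemma ccoef_S m k :
  ccoef (S m) k = (gcoef (S m) k + RtoC (a (S m)) * mul_affine z0 (mul_affine z0 (ccoef m)) k)%C.
Proof. unfold gcoef, ccoef. simpl. now destruct (cg_coef m). Qed.

Lemma peval_gcoef_S m K w :
  peval (gcoef (S m)) K w = (peval (gcoef m) K w + ((1 - RtoC (a (S m))) * peval (gcoef m) K w
  + (1 - RtoC (a (S m)) * RtoC (a (S m))) * peval (mul_affine z0 (mul_affine z0 (ccoef m))) K w
  - RtoC (b (S m)) * peval (mul_affine z0 (ccoef m)) K w) / RtoC (a (S m)))%C.
Proof.
  rewrite (peval_ext _ _ _ _ (gcoef_S m)). unfold peval.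
  induction K; simpl; [field|rewrite IHK; field]; intros H; injection H;
    apply Rgt_not_eq, ha; lia.
Qed.

Lemma coef_eval w n :
  coef_support (ccoef n) (2 * n) /\ coef_support (gcoef n) (2 * n) /\
  forall K, (2 * n + 1 <= K)%nat ->
    peval (ccoef n) K w = cn a b n (z0 + w) /\ peval (gcoef n) K w = gn a b n (z0 + w).
Proof.
  induction n as [|n [Sc [Sg IH]]].
  - split; [|split]; [intros [|k] Hk; [lia | reflexivity] .. |].
    intros K HK. rewrite cn_0, gn_0. split; apply peval_unit_coef; lia.
  - assert (HA : RtoC (a (S n)) <> RtoC 0).
    { intros H. injection H. apply Rgt_not_eq, ha. lia. }
    pose proof (coef_support_mul_affine z0 _ _ Sc) as SZ.
    pose proof (coef_support_mul_affine z0 _ _ SZ) as SZZ.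
    assert (SG : coef_support (gcoef (S n)) (2 * S n)).
    { intros k Hk. rewrite gcoef_S, Sg, SZ, SZZ by lia. field. easy. }
    split; [|split; [easy|]].
    + intros k Hk. rewrite ccoef_S, SG, SZZ by lia. ring.
    + intros K HK. destruct (IH K ltac:(lia)) as [Ec Eg].
      assert (EZ : peval (mul_affine z0 (ccoef n)) K w = ((z0 + w) * cn a b n (z0 + w))%C)
        by (rewrite (peval_mul_affine _ _ (2 * n)), Ec by (easy || lia); reflexivity).
      assert (EZZ : peval (mul_affine z0 (mul_affine z0 (ccoef n))) K w
                    = ((z0 + w) * ((z0 + w) * cn a b n (z0 + w)))%C)
        by (rewrite (peval_mul_affine _ _ (S (2 * n))), EZ by (easy || lia); reflexivity).
      assert (EG : peval (gcoef (S n)) K w = gn a b (S n) (z0 + w)).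
      { rewrite peval_gcoef_S, Eg, EZ, EZZ.
        replace (gn a b (S n) (z0 + w))
          with (gn a b n (z0 + w) + (gn a b (S n) (z0 + w) - gn a b n (z0 + w)))%C by ring.
        rewrite (gn_S_sub a b ha). field. easy. }
      split; [|easy].
      rewrite (peval_ext _ _ _ _ (ccoef_S n)), peval_add, peval_scal, EG, EZZ, (cn_gn a b). ring.
Qed.

Lemma peval_gcoef w n K : (2 * n + 1 <= K)%nat -> peval (gcoef n) K w = gn a b n (z0 + w).
Proof. intros HK. now apply coef_eval. Qed.

Variables (rho m : R).
Hypothesis hrho : 0 < rho.
Hypothesis hm : 0 < m.
Hypothesis ham : forall n, m <= a (S n).

Let t := Cmod z0 + rho.

Lemma wnorm_mul_affine2 f D :
  wnorm rho (mul_affine z0 (mul_affine z0 f)) D <= t ^ 2 * wnorm rho f D.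
Proof.
  eapply Rle_trans; [apply wnorm_mul_affine; easy|]. fold t.
  pose proof (wnorm_mul_affine rho hrho z0 f D). fold t in H.
  assert (0 <= t) by (unfold t; pose proof (Cmod_ge_0 z0); lra).
  replace (t ^ 2) with (t * t) by ring. rewrite Rmult_assoc. now apply Rmult_le_compat_l.
Qed.

Lemma gcoef_diff_wnorm_step D n :
  wnorm rho (fun k => gcoef (S n) k - gcoef n k)%C D <=
  (Rabs (1 - a (S n)) * wnorm rho (gcoef n) D
   + (Rabs (1 - a (S n) ^ 2) * t ^ 2 + Rabs (b (S n)) * t) * wnorm rho (ccoef n) D) / a (S n).
Proof.
  pose proof (ha (S n) ltac:(lia)) as Ha.
  assert (HA : RtoC (a (S n)) <> RtoC 0) by (intros H; injection H; lra).
  set (c := (/ RtoC (a (S n)))%C).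
  rewrite (wnorm_ext rho _ (fun k => (c * RtoC (1 - a (S n))) * gcoef n k
    + ((c * RtoC (1 - a (S n) ^ 2)) * mul_affine z0 (mul_affine z0 (ccoef n)) k
       + (c * RtoC (- b (S n))) * mul_affine z0 (ccoef n) k))%C).
  2:{ intros k. rewrite gcoef_S. unfold c. rewrite RtoC_opp, !RtoC_minus, RtoC_pow.
      simpl. field. easy. }
  eapply Rle_trans; [apply (wnorm_add rho hrho)|].
  eapply Rle_trans; [apply Rplus_le_compat_l, (wnorm_add rho hrho)|].
  rewrite !wnorm_scal, !Cmod_mult, !Cmod_R, Rabs_Ropp.
  assert (Hc : Cmod c = / a (S n))
    by (unfold c; rewrite Cmod_inv, Cmod_R, Rabs_right by (easy || lra); easy).
  rewrite Hc. pose proof (wnorm_mul_affine2 (ccoef n) D).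
  pose proof (wnorm_mul_affine rho hrho z0 (ccoef n) D). fold t in H0.
  pose proof (Rabs_pos (1 - a (S n) ^ 2)). pose proof (Rabs_pos (b (S n))).
  assert (Hi : 0 < / a (S n)) by (apply Rinv_0_lt_compat; lra).
  set (Y := wnorm rho (ccoef n) D) in *.
  assert (/ a (S n) * Rabs (1 - a (S n) ^ 2) * wnorm rho (mul_affine z0 (mul_affine z0 (ccoef n))) D
          <= / a (S n) * Rabs (1 - a (S n) ^ 2) * (t ^ 2 * Y))
    by (apply Rmult_le_compat_l; [apply Rmult_le_pos|]; lra).
  assert (/ a (S n) * Rabs (b (S n)) * wnorm rho (mul_affine z0 (ccoef n)) D
          <= / a (S n) * Rabs (b (S n)) * (t * Y))
    by (apply Rmult_le_compat_l; [apply Rmult_le_pos|]; lra).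
  replace ((Rabs (1 - a (S n)) * wnorm rho (gcoef n) D
           + (Rabs (1 - a (S n) ^ 2) * t ^ 2 + Rabs (b (S n)) * t) * Y) / a (S n))
    with (/ a (S n) * Rabs (1 - a (S n)) * wnorm rho (gcoef n) D
          + (/ a (S n) * Rabs (1 - a (S n) ^ 2) * (t ^ 2 * Y)
             + / a (S n) * Rabs (b (S n)) * (t * Y)))
    by (field; lra).
  lra.
Qed.

Lemma gcoef_diff_wnorm_le D n : ex_series (rate a b t m) ->
  wnorm rho (fun k => gcoef (S n) k - gcoef n k)%C D
  <= rate a b t m n * exp (Series (rate a b t m)).
Proof.
  intros Hr. assert (Ht : 0 <= t) by (unfold t; pose proof (Cmod_ge_0 z0); lra).
  apply (diff_le_rate_exp a b t m Ht hm ham (fun n => wnorm rho (ccoef n) D)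
    (fun n => wnorm rho (gcoef n) D) (fun n => wnorm rho (fun k => gcoef (S n) k - gcoef n k)%C D));
    intros; try apply wnorm_ge0; auto; try apply wnorm_unit_coef.
  - rewrite (wnorm_ext rho _ _ D (ccoef_S n0)).
    eapply Rle_trans; [apply (wnorm_add rho hrho)|].
    rewrite wnorm_scal, Cmod_R, Rabs_right by (apply Rle_ge, Rlt_le, ha; lia).
    apply Rplus_le_compat_l. rewrite Rmult_assoc. apply Rmult_le_compat_l; [apply Rlt_le, ha; lia|].
    apply wnorm_mul_affine2.
  - apply gcoef_diff_wnorm_step.
  - rewrite (wnorm_ext rho (gcoef (S n0)) (fun k => gcoef n0 k + (gcoef (S n0) k - gcoef n0 k))%C)
      by (intros; ring).
    apply (wnorm_add rho hrho).
Qed.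

End Coefficients.

Section Analyticity.
Variables (a b : nat -> R).
Hypothesis ha : forall n, (1 <= n)%nat -> 0 < a n.
Hypothesis hs : ex_series (fun n => jdev a b (S n)).

Lemma ulim_analytic_open_disk : analytic_on (ulim (gn a b)) open_disk.
Proof.
  intros z0 Hz0. unfold open_disk in Hz0. pose proof (Cmod_ge_0 z0).
  set (rho := (1 - Cmod z0) / 2). assert (Hrho : 0 < rho) by (unfold rho; lra).
  set (t := Cmod z0 + rho).
  destruct (a_lower_bound a b ha hs) as [m [Hm Ham]].
  assert (Hr : ex_series (rate a b t m))
    by (apply ex_series_rate_lt1; unfold t, rho in *; (easy || lra)).
  set (e := fun n => rate a b t m n * exp (Series (rate a b t m))).
  assert (He0 : forall n, 0 <= e n).
  { intros n. pose proof (rate_ge0 a b t m ltac:(unfold t; lra) Hm Ham n).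
    pose proof (exp_pos (Series (rate a b t m))). unfold e. nra. }
  assert (He : ex_series e) by now apply ex_series_scal_r.
  exists rho, (coef_lim (gcoef a b z0)). split; [easy|]. intros z Hz.
  assert (Hz1 : Cmod z < 1).
  { replace z with (z0 + (z - z0))%C by ring.
    eapply Rle_lt_trans; [apply Cmod_triangle|]. unfold rho in Hz. lra. }
  apply (is_pseries_of_wnorm_approx (gcoef a b z0) _ (fun n => gn a b n z) (fun n => 2 * n + 1)%nat
           (series_tail e) _ _ rho); [lra | | | now apply is_lim_seq_series_tail |].
  - intros n K HK. rewrite (peval_gcoef a b ha) by easy. f_equal. ring.
  - apply (cv_C_of_unif_cv _ _ (boundary_region (Cmod (1 - z * z)%C))).
    + apply (gn_unif_cv_boundary_region a b ha hs).
      apply one_minus_sqr_Cmod_pos, open_disk_pm1, Hz1.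
    + split; [lra | apply Rle_refl].
  - intros n K. apply (wnorm_coef_lim_le_series_tail _ rho e Hrho He0 He).
    intros n' D. now apply (gcoef_diff_wnorm_le a b ha z0 rho m Hrho Hm Ham).
Qed.

End Analyticity.

Theorem theoremA3 (a b : nat -> R) (ha : forall n, (1 <= n)%nat -> 0 < a n) :
  (* (i) *)
  (ex_series (fun n => jdev a b (S n)) ->
     exists u : C -> C,
       (forall z, closed_disk_pm1 z -> cv_C (fun n => gn a b n z) (u z)) /\
       unif_cv_compacts (gn a b) u closed_disk_pm1 /\
       analytic_on u open_disk /\
       continuous_on_C u closed_disk_pm1 /\
       (forall z, open_disk z -> cv_C (fun n => cn a b n z) (u z / (1 - z * z))%C))
  /\
  (* (ii) *)
  (ex_series (fun n => INR (S n) * jdev a b (S n)) ->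
     exists u : C -> C,
       (forall z, closed_disk z -> cv_C (fun n => gn a b n z) (u z)) /\
       unif_cv_on (gn a b) u closed_disk /\
       continuous_on_C u closed_disk)
  /\
  (* (iii) *)
  (forall C0 R0 : R, 1 < R0 ->
     (forall n, (1 <= n)%nat -> jdev a b n <= C0 * / R0 ^ (2 * n)) ->
     exists u : C -> C,
       (forall z, disk_R R0 z -> cv_C (fun n => gn a b n z) (u z)) /\
       unif_cv_compacts (gn a b) u (disk_R R0)).
Proof.
  split; [|split].
  - intros hs. exists (ulim (gn a b)). repeat split.
    + intros z Hz. apply (cv_C_of_unif_cv _ _ (boundary_region (Cmod (1 - z * z)%C))).
      * now apply gn_unif_cv_boundary_region, one_minus_sqr_Cmod_pos.
      * split; [apply Hz | apply Rle_refl].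
    + intros K HK Hsub. destruct (compact_pm1_boundary_region K HK Hsub) as [dl [Hdl HKdl]].
      now apply (unif_cv_on_subset _ _ _ _ (gn_unif_cv_boundary_region a b ha hs dl Hdl)).
    + now apply ulim_analytic_open_disk.
    + now apply ulim_continuous_pm1.
    + now apply cn_cv_open_disk.
  - intros hs. exists (ulim (gn a b)). pose proof (gn_unif_cv_closed_disk a b ha hs) as Hu.
    repeat split; [intros z; now apply cv_C_of_unif_cv | easy |].
    intros z Hz. apply (continuous_within_of_unif_cv _ _ _ _ z Hu); [|easy|].
    + intros n. now apply gn_Ccontinuous.
    + exists 1. split; [lra | easy].
  - intros C0 R0 HR HJ. exists (ulim (gn a b)). split.
    + intros z Hz.
      apply (cv_C_of_unif_cv _ _ _ _ (gn_unif_cv_disk_R a b ha C0 R0 HR HJ (Rmax 1 (Cmod z))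
        (conj (Rmax_l _ _) (Rmax_lub_lt _ _ _ HR Hz)))), Rmax_r.
    + intros K HK Hsub. destruct (compact_disk_radius K R0 HK Hsub) as [r [Hr Hrz]].
      apply (unif_cv_on_subset _ _ _ _ (gn_unif_cv_disk_R a b ha C0 R0 HR HJ (Rmax 1 r)
        (conj (Rmax_l _ _) (Rmax_lub_lt _ _ _ HR Hr)))).
      intros z Hz. eapply Rle_trans; [now apply Hrz | apply Rmax_r].
Qed.
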